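(* Let $\Delta>0$, $\nu>0$, $R\in\mathbb{R}$ with $\Delta^2-4\Delta\nu(1+\Delta R)<0$ (so that $p_\pm^2$ are non-real complex conjugates and all eigenvalues $\lambda^{\rm o}_k,\lambda^{\rm e}_k$ are nonzero). Let $p_+$ be a square root of $p_+^2$. Then for all $x,y\in[-1,1]$, $$\sum_{k=1}^{\infty}\left\{\frac{w^{\rm o}_k(x)w^{\rm o}_k(y)}{\lambda^{\rm o}_k}+\frac{w^{\rm e}_k(x)w^{\rm e}_k(y)}{\lambda^{\rm e}_k}\right\} =\frac{1}{\Delta\nu\,\Im(p_+^2-p_-^2)}\,\Im\!\left(\frac{-\cos\big(2p_+-p_+|x-y|\big)+\cos\big(p_+(x+y)\big)}{p_+\sin(2p_+)}\right)=:G(x,y),$$ and $G$ is the Green's function of the boundary value problem $\mathcal{L}v=r$, $v(-1)=v(1)=v_{xx}(-1)=v_{xx}(1)=0$, i.e. for every continuous $r$ on $[-1,1]$ the function $v(x)=\int_{-1}^{1}G(x,y)r(y)\,dy$ is its solution.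
   Context: $\mathcal{L}=1+\Delta R+\Delta\,\partial_{xx}+\Delta\nu\,\partial_{xxxx}$ on $[-1,1]$. $w^{\rm o}_k(x)=\sin(k\pi x)$, $w^{\rm e}_k(x)=\cos((k-\tfrac12)\pi x)$, $\lambda^{\rm o}_k=1+\Delta R-\Delta\pi^2k^2+\Delta\nu\pi^4k^4$, $\lambda^{\rm e}_k=1+\Delta R-\Delta\pi^2(k-\tfrac12)^2+\Delta\nu\pi^4(k-\tfrac12)^4$ for $k\ge1$. $p_\pm^2=\frac{1}{2\nu}\pm\frac{1}{2\Delta\nu}\sqrt{\Delta^2-4\Delta\nu(1+\Delta R)}$, where the square root of the negative discriminant is $i\sqrt{4\Delta\nu(1+\Delta R)-\Delta^2}$. *)

From Stdlib Require Import Reals Lra.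
Open Scope R_scope.

Definition Cplx : Type := (R * R)%type.
Definition Re (z : Cplx) : R := fst z.
Definition Im (z : Cplx) : R := snd z.
Definition RtoC (a : R) : Cplx := (a, 0).
Definition Cadd (z w : Cplx) : Cplx := (fst z + fst w, snd z + snd w).
Definition Copp (z : Cplx) : Cplx := (- fst z, - snd z).
Definition Csub (z w : Cplx) : Cplx := Cadd z (Copp w).
Definition Cmul (z w : Cplx) : Cplx :=
  (fst z * fst w - snd z * snd w, fst z * snd w + snd z * fst w).
Definition Cinv (z : Cplx) : Cplx :=
  (fst z / (fst z ^ 2 + snd z ^ 2), - snd z / (fst z ^ 2 + snd z ^ 2)).
Definition Cdiv (z w : Cplx) : Cplx := Cmul z (Cinv w).
Definition Cscal (a : R) (z : Cplx) : Cplx := (a * fst z, a * snd z).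
(** Complex cosine and sine:
    cos(a+ib) = cos a cosh b - i sin a sinh b,
    sin(a+ib) = sin a cosh b + i cos a sinh b. *)
Definition Ccos (z : Cplx) : Cplx :=
  (cos (fst z) * cosh (snd z), - (sin (fst z) * sinh (snd z))).
Definition Csin (z : Cplx) : Cplx :=
  (sin (fst z) * cosh (snd z), cos (fst z) * sinh (snd z)).

(** Eigenfunctions and eigenvalues (k >= 1). *)
Definition wo (k : nat) (x : R) : R := sin (INR k * PI * x).
Definition we (k : nat) (x : R) : R := cos ((INR k - 1/2) * PI * x).
Definition lamo (D nu Rr : R) (k : nat) : R :=
  1 + D * Rr - D * PI ^ 2 * INR k ^ 2 + D * nu * PI ^ 4 * INR k ^ 4.
Definition lame (D nu Rr : R) (k : nat) : R :=
  1 + D * Rr - D * PI ^ 2 * (INR k - 1/2) ^ 2 + D * nu * PI ^ 4 * (INR k - 1/2) ^ 4.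

(** Discriminant and p_{+-}^2 (for negative discriminant). *)
Definition discr (D nu Rr : R) : R := D ^ 2 - 4 * D * nu * (1 + D * Rr).
Definition pplus2 (D nu Rr : R) : Cplx :=
  (1 / (2 * nu), 1 / (2 * D * nu) * sqrt (4 * D * nu * (1 + D * Rr) - D ^ 2)).
Definition pminus2 (D nu Rr : R) : Cplx :=
  (1 / (2 * nu), - (1 / (2 * D * nu) * sqrt (4 * D * nu * (1 + D * Rr) - D ^ 2))).

Definition Gfun (D nu Rr : R) (p : Cplx) (x y : R) : R :=
  1 / (D * nu * Im (Csub (pplus2 D nu Rr) (pminus2 D nu Rr))) *
  Im (Cdiv
        (Cadd (Copp (Ccos (Csub (Cscal 2 p) (Cscal (Rabs (x - y)) p))))
              (Ccos (Cscal (x + y) p)))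
        (Cmul p (Csin (Cscal 2 p)))).

Definition series_term (D nu Rr : R) (x y : R) (k : nat) : R :=
  wo k x * wo k y / lamo D nu Rr k + we k x * we k y / lame D nu Rr k.

Definition inI (x : R) : Prop := -1 <= x <= 1.
Definition cont_on_I (f : R -> R) : Prop :=
  forall x, inI x -> limit1_in f inI (f x) x.

Definition is_solution (D nu Rr : R) (r v : R -> R) : Prop :=
  exists v1 v2 v3 v4 : R -> R,
    (forall x, -1 < x < 1 ->
        derivable_pt_lim v x (v1 x) /\ derivable_pt_lim v1 x (v2 x) /\
        derivable_pt_lim v2 x (v3 x) /\ derivable_pt_lim v3 x (v4 x) /\
        (1 + D * Rr) * v x + D * v2 x + D * nu * v4 x = r x) /\
    cont_on_I v /\ cont_on_I v1 /\ cont_on_I v2 /\ cont_on_I v3 /\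
    v (-1) = 0 /\ v 1 = 0 /\ v2 (-1) = 0 /\ v2 1 = 0.

(* Products of eigenfunctions are differences of cosines at the angles pi|x-y|/2 and
   pi - pi|x+y|/2, and each eigenvalue is a constant multiple of |m^2 - b|^2 with
   b = 4 p_+^2 / pi^2. So the partial sums of the series are imaginary parts of partial sums of
   S(t) = sum_m cos(m t) / (m^2 - b), whose classical closed form
   1/(2b) - pi cos(c (t - pi)) / (2 c sin(pi c)), c^2 = b, evaluated at the two angles is G.
   Uniform convergence on [0, pi]: S_N(t) = S_N(pi) + Q_N(t) + b W_N(t), where
   Q_N(t) = sum_{m<=N} (cos m t - cos m pi) / m^2 tends uniformly to (pi - t)^2/4 (a Dirichlet
   kernel estimate) and W_N'' = -S_N; so the difference f_N of W_N and an explicit particular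
   solution satisfies f_N'' + b f_N = o(1), f_N'(0) = f_N'(pi) = 0, and variation of constants
   bounds it.

   For the boundary value problem, splitting the integral at y = x writes v(x) as a combination
   of integrals of cos(p y) r(y) and sin(p y) r(y) over [-1, x] and [x, 1] with trigonometric
   coefficients in x. Differentiating, only the jump of the third x-derivative of the kernel
   across the diagonal contributes (the jump of the first one is real), giving r / (D nu); p^2
   solving D nu z^2 - D z + 1 + D R = 0 gives L v = r, and the kernel and its second
   x-derivative vanish at x = +-1. *)

From Stdlib Require Import Reals Lra Lia Field.
From Coquelicot Require Import Rcomplements Hierarchy Derive RInt RInt_analysis AutoDerive Continuity.
Open Scope R_scope.

Definition C0 : Cplx := (0, 0).
Definition C1 : Cplx := (1, 0).

Lemma Cplx_ext (z w : Cplx) : fst z = fst w -> snd z = snd w -> z = w.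
Proof. destruct z, w; simpl; intros; subst; reflexivity. Qed.

Ltac Cplx_ring := apply Cplx_ext; simpl; ring.

Lemma Cmul_Cinv_r (z : Cplx) : z <> C0 -> Cmul z (Cinv z) = C1.
Proof.
  destruct z as [a b]; unfold C0, C1, Cmul, Cinv; simpl; intros Hz.
  assert (0 < a ^ 2 + b ^ 2).
  { destruct (Req_dec a 0), (Req_dec b 0); subst; [now contradiction Hz | nra ..]. }
  apply Cplx_ext; simpl; field; lra.
Qed.

Lemma Cfield_theory : field_theory C0 C1 Cadd Cmul Csub Copp Cdiv Cinv eq.
Proof.
  constructor.
  - constructor; intros; unfold C0, C1, Csub;
      repeat match goal with z : Cplx |- _ => destruct z end; Cplx_ring.
  - unfold C0, C1; intros H; inversion H; lra.
  - reflexivity.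
  - intros z Hz. rewrite <- (Cmul_Cinv_r z Hz). destruct z, (Cinv _); Cplx_ring.
Qed.
Add Field Cfield : Cfield_theory.

Lemma Cscal_RtoC (a : R) (z : Cplx) : Cscal a z = Cmul (RtoC a) z.
Proof. destruct z; Cplx_ring. Qed.

Lemma RtoC_minus (a b : R) : RtoC (a - b) = Csub (RtoC a) (RtoC b).
Proof. Cplx_ring. Qed.

Lemma Im_RtoC_mul (a : R) (z : Cplx) : snd (Cmul (RtoC a) z) = a * snd z.
Proof. destruct z; simpl; ring. Qed.

Lemma Im_add_RtoC (z : Cplx) (a : R) : snd (Cadd z (RtoC a)) = snd z.
Proof. destruct z; simpl; ring. Qed.

Lemma Cmul_neq0 (z w : Cplx) : z <> C0 -> w <> C0 -> Cmul z w <> C0.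
Proof.
  intros Hz Hw E. apply Hw.
  transitivity (Cmul (Cinv z) (Cmul z w)); [field; exact Hz |].
  rewrite E; destruct (Cinv z); Cplx_ring.
Qed.

Lemma cosh_plus (x y : R) : cosh (x + y) = cosh x * cosh y + sinh x * sinh y.
Proof. unfold cosh, sinh. rewrite exp_plus, Ropp_plus_distr, exp_plus. field. Qed.

Lemma sinh_plus (x y : R) : sinh (x + y) = sinh x * cosh y + cosh x * sinh y.
Proof. unfold cosh, sinh. rewrite exp_plus, Ropp_plus_distr, exp_plus. field. Qed.

Lemma Ccos_add (z w : Cplx) :
  Ccos (Cadd z w) = Csub (Cmul (Ccos z) (Ccos w)) (Cmul (Csin z) (Csin w)).
Proof.
  destruct z as [z1 z2], w as [w1 w2]; unfold Ccos, Csin; simpl.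
  rewrite cos_plus, sin_plus, cosh_plus, sinh_plus. Cplx_ring.
Qed.

Lemma Csin_add (z w : Cplx) :
  Csin (Cadd z w) = Cadd (Cmul (Csin z) (Ccos w)) (Cmul (Ccos z) (Csin w)).
Proof.
  destruct z as [z1 z2], w as [w1 w2]; unfold Ccos, Csin; simpl.
  rewrite cos_plus, sin_plus, cosh_plus, sinh_plus. Cplx_ring.
Qed.

Lemma Ccos_opp (z : Cplx) : Ccos (Copp z) = Ccos z.
Proof.
  destruct z as [a b]; unfold Ccos; simpl. rewrite cos_neg, sin_neg.
  unfold cosh, sinh. rewrite Ropp_involutive. apply Cplx_ext; simpl; field.
Qed.

Lemma Csin_opp (z : Cplx) : Csin (Copp z) = Copp (Csin z).
Proof.
  destruct z as [a b]; unfold Csin; simpl. rewrite cos_neg, sin_neg.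
  unfold cosh, sinh. rewrite Ropp_involutive. apply Cplx_ext; simpl; field.
Qed.

Lemma Csin_sub (z w : Cplx) :
  Csin (Csub z w) = Csub (Cmul (Csin z) (Ccos w)) (Cmul (Ccos z) (Csin w)).
Proof. unfold Csub at 1. rewrite Csin_add, Ccos_opp, Csin_opp. unfold Csub; ring. Qed.

Lemma Ccos_sub (z w : Cplx) :
  Ccos (Csub z w) = Cadd (Cmul (Ccos z) (Ccos w)) (Cmul (Csin z) (Csin w)).
Proof. unfold Csub at 1. rewrite Ccos_add, Ccos_opp, Csin_opp. unfold Csub; ring. Qed.

Lemma Ccos_sq_add_Csin_sq (z : Cplx) :
  Cadd (Cmul (Ccos z) (Ccos z)) (Cmul (Csin z) (Csin z)) = C1.
Proof.
  destruct z as [a b]; unfold Ccos, Csin, C1; simpl.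
  assert (sin a ^ 2 + cos a ^ 2 = 1) by (rewrite <- (sin2_cos2 a); unfold Rsqr; ring).
  assert (cosh b ^ 2 - sinh b ^ 2 = 1).
  { unfold cosh, sinh.
    assert (exp b * exp (- b) = 1) by (rewrite <- exp_plus, Rplus_opp_r, exp_0; auto). nra. }
  apply Cplx_ext; simpl; nra.
Qed.

Lemma Ccos_scal_Rabs (r : R) (z : Cplx) : Ccos (Cscal (Rabs r) z) = Ccos (Cscal r z).
Proof.
  destruct (Rle_dec 0 r); [now rewrite Rabs_pos_eq |].
  rewrite Rabs_left by lra. rewrite <- (Ccos_opp (Cscal r z)).
  f_equal. destruct z; Cplx_ring.
Qed.

Lemma Csin_eq_C0_Im (z : Cplx) : Csin z = C0 -> snd z = 0.
Proof.
  destruct z as [a b]; unfold Csin, C0; simpl; intros E. injection E as E1 E2.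
  assert (0 < cosh b) by (unfold cosh; pose proof (exp_pos b); pose proof (exp_pos (- b)); lra).
  assert (Hs : sin a = 0) by (apply Rmult_integral in E1; destruct E1; lra).
  assert (Hc : cos a <> 0).
  { intros Hc. pose proof (sin2_cos2 a) as K. rewrite Hs, Hc in K. unfold Rsqr in K. lra. }
  apply Rmult_integral in E2; destruct E2 as [E2 | E2]; [contradiction |].
  unfold sinh in E2. assert (Hb : exp b = exp (- b)) by lra. apply exp_inv in Hb. lra.
Qed.

Lemma is_derive_eq (f : R -> R) (x l l' : R) : is_derive f x l -> l = l' -> is_derive f x l'.
Proof. intros H E; subst; exact H. Qed.

Lemma continuous_of_ex_derive (f : R -> R) (x : R) : ex_derive f x -> continuous f x.
Proof. apply (ex_derive_continuous (K := R_AbsRing) (V := R_NormedModule)). Qed.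

Definition is_Cderive (f : R -> Cplx) (x : R) (l : Cplx) : Prop :=
  is_derive (fun t => fst (f t)) x (fst l) /\ is_derive (fun t => snd (f t)) x (snd l).

Lemma is_Cderive_eq (f : R -> Cplx) (x : R) (l l' : Cplx) :
  is_Cderive f x l -> l = l' -> is_Cderive f x l'.
Proof. intros H E; subst; exact H. Qed.

Lemma is_Cderive_const (z : Cplx) (x : R) : is_Cderive (fun _ => z) x C0.
Proof. split; apply is_derive_Reals, derivable_pt_lim_const. Qed.

Lemma is_Cderive_plus (f g : R -> Cplx) (x : R) (l m : Cplx) :
  is_Cderive f x l -> is_Cderive g x m -> is_Cderive (fun t => Cadd (f t) (g t)) x (Cadd l m).
Proof. intros [H1 H2] [H3 H4]; split; apply (is_derive_plus (V := R_NormedModule)); auto. Qed.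

Lemma is_Cderive_opp (f : R -> Cplx) (x : R) (l : Cplx) :
  is_Cderive f x l -> is_Cderive (fun t => Copp (f t)) x (Copp l).
Proof. intros [H1 H2]; split; apply (is_derive_opp (V := R_NormedModule)); auto. Qed.

Lemma is_Cderive_minus (f g : R -> Cplx) (x : R) (l m : Cplx) :
  is_Cderive f x l -> is_Cderive g x m -> is_Cderive (fun t => Csub (f t) (g t)) x (Csub l m).
Proof. intros; apply is_Cderive_plus, is_Cderive_opp; auto. Qed.

Lemma is_Cderive_mult (f g : R -> Cplx) (x : R) (l m : Cplx) :
  is_Cderive f x l -> is_Cderive g x m ->
  is_Cderive (fun t => Cmul (f t) (g t)) x (Cadd (Cmul l (g x)) (Cmul (f x) m)).
Proof.
  intros [H1 H2] [H3 H4]; apply is_derive_Reals in H1, H2, H3, H4; split; simpl;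
    eapply is_derive_eq.
  - apply is_derive_Reals, derivable_pt_lim_minus; apply derivable_pt_lim_mult; eauto.
  - simpl; ring.
  - apply is_derive_Reals, derivable_pt_lim_plus; apply derivable_pt_lim_mult; eauto.
  - simpl; ring.
Qed.

Lemma is_Cderive_mult_l (z : Cplx) (f : R -> Cplx) (x : R) (l : Cplx) :
  is_Cderive f x l -> is_Cderive (fun t => Cmul z (f t)) x (Cmul z l).
Proof.
  intros H. eapply is_Cderive_eq; [apply (is_Cderive_mult _ _ x _ _ (is_Cderive_const z x) H) |].
  unfold C0; destruct (f x), z, l; Cplx_ring.
Qed.

Lemma is_Cderive_mult_r (f : R -> Cplx) (z : Cplx) (x : R) (l : Cplx) :
  is_Cderive f x l -> is_Cderive (fun t => Cmul (f t) z) x (Cmul l z).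
Proof.
  intros H. eapply is_Cderive_eq; [apply (is_Cderive_mult _ _ x _ _ H (is_Cderive_const z x)) |].
  unfold C0; destruct (f x), z, l; Cplx_ring.
Qed.

Lemma is_Cderive_scal (f : R -> R) (z : Cplx) (x l : R) :
  is_derive f x l -> is_Cderive (fun t => Cscal (f t) z) x (Cscal l z).
Proof.
  intros H; apply is_derive_Reals in H; destruct z; split; simpl;
    apply is_derive_Reals, derivable_pt_lim_scal_right; exact H.
Qed.

Definition Caffine (q r : Cplx) (t : R) : Cplx := Cadd (Cscal t q) r.

Lemma is_Cderive_cos_affine (q r : Cplx) (x : R) :
  is_Cderive (fun t => Ccos (Caffine q r t)) x (Copp (Cmul q (Csin (Caffine q r x)))).
Proof.
  destruct q, r; unfold Caffine, Ccos, Csin, cosh, sinh; split; simpl;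
    auto_derive; auto; field.
Qed.

Lemma is_Cderive_sin_affine (q r : Cplx) (x : R) :
  is_Cderive (fun t => Csin (Caffine q r t)) x (Cmul q (Ccos (Caffine q r x))).
Proof.
  destruct q, r; unfold Caffine, Ccos, Csin, cosh, sinh; split; simpl;
    auto_derive; auto; field.
Qed.

Fixpoint rsum (f : nat -> R) (N : nat) : R :=
  match N with O => 0 | S n => rsum f n + f (S n) end.

Fixpoint Csum (f : nat -> Cplx) (N : nat) : Cplx :=
  match N with O => C0 | S n => Cadd (Csum f n) (f (S n)) end.

Lemma Im_Csum (f : nat -> Cplx) (N : nat) : snd (Csum f N) = rsum (fun m => snd (f m)) N.
Proof. induction N; simpl; [reflexivity | now rewrite IHN]. Qed.

Lemma is_derive_rsum (F F' : nat -> R -> R) (x : R) (N : nat) :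
  (forall m, (1 <= m)%nat -> is_derive (F m) x (F' m x)) ->
  is_derive (fun t => rsum (fun m => F m t) N) x (rsum (fun m => F' m x) N).
Proof.
  intros H; induction N; simpl.
  - apply is_derive_Reals, derivable_pt_lim_const.
  - apply (is_derive_plus (V := R_NormedModule)); [exact IHN | apply H; lia].
Qed.

Lemma is_Cderive_Csum (F F' : nat -> R -> Cplx) (x : R) (N : nat) :
  (forall m, (1 <= m)%nat -> is_Cderive (F m) x (F' m x)) ->
  is_Cderive (fun t => Csum (fun m => F m t) N) x (Csum (fun m => F' m x) N).
Proof.
  intros H; induction N; simpl.
  - apply is_Cderive_const.
  - apply is_Cderive_plus; [exact IHN | apply H; lia].
Qed.

Lemma continuous_rsum (F : nat -> R -> R) (x : R) (N : nat) :
  (forall m, continuous (F m) x) -> continuous (fun t => rsum (fun m => F m t) N) x.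
Proof.
  intros H; induction N; simpl.
  - apply continuous_const.
  - apply (continuous_plus (fun t => rsum (fun m => F m t) N) (F (S N))); auto.
Qed.

Lemma INR_neq0 (m : nat) : (1 <= m)%nat -> INR m <> 0.
Proof. intros; apply not_0_INR; lia. Qed.

Lemma sin_INR_mult_PI (m : nat) : sin (INR m * PI) = 0.
Proof. apply sin_eq_0_1. exists (Z.of_nat m). now rewrite <- INR_IZR_INZ. Qed.

(** * The remainder of the series of (cos mt - cos m pi) / m^2 *)

Definition dirichlet (N : nat) (s : R) : R := / 2 + rsum (fun m => cos (INR m * s)) N.

Lemma dirichlet_closed (N : nat) (s : R) :
  2 * sin (s / 2) * dirichlet N s = sin ((INR N + / 2) * s).
Proof.
  induction N; unfold dirichlet in *; cbn [rsum].
  - simpl INR. replace ((0 + / 2) * s) with (s / 2) by field. field.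
  - transitivity (2 * sin (s / 2) * (/ 2 + rsum (fun m => cos (INR m * s)) N)
                  + 2 * sin (s / 2) * cos (INR (S N) * s)); [ring |].
    rewrite IHN, S_INR.
    replace ((INR N + / 2) * s) with ((INR N + 1) * s - s / 2) by field.
    replace ((INR N + 1 + / 2) * s) with ((INR N + 1) * s + s / 2) by field.
    rewrite sin_minus, sin_plus. ring.
Qed.

Lemma dirichlet_eq (N : nat) (s : R) :
  sin (s / 2) <> 0 -> dirichlet N s = sin ((INR N + / 2) * s) / (2 * sin (s / 2)).
Proof. intros H. rewrite <- dirichlet_closed. field. exact H. Qed.

Lemma continuous_dirichlet (N : nat) (s : R) : continuous (dirichlet N) s.
Proof.
  apply (continuous_plus (fun _ => / 2) (fun t => rsum (fun m => cos (INR m * t)) N)).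
  - apply continuous_const.
  - apply continuous_rsum. intros m. apply continuous_of_ex_derive. auto_derive. auto.
Qed.

Definition cos_quad_sum (N : nat) (t : R) : R :=
  rsum (fun m => (cos (INR m * t) - cos (INR m * PI)) / INR m ^ 2) N.

Definition sin_sum (N : nat) (t : R) : R := rsum (fun m => sin (INR m * t) / INR m) N.

Lemma is_derive_cos_quad_sum (N : nat) (t : R) : is_derive (cos_quad_sum N) t (- sin_sum N t).
Proof.
  replace (- sin_sum N t) with (rsum (fun m => - sin (INR m * t) / INR m) N).
  - unfold cos_quad_sum.
    apply (is_derive_rsum (fun m t => (cos (INR m * t) - cos (INR m * PI)) / INR m ^ 2)
             (fun m t => - sin (INR m * t) / INR m)).
    intros m Hm. pose proof (INR_neq0 m Hm). auto_derive; auto. field. auto.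
  - unfold sin_sum. induction N; cbn [rsum]; [ring |]. rewrite IHN. field. apply INR_neq0. lia.
Qed.

Lemma is_derive_sin_sum (N : nat) (t : R) : is_derive (sin_sum N) t (dirichlet N t - / 2).
Proof.
  unfold sin_sum, dirichlet. replace (/ 2 + rsum (fun m => cos (INR m * t)) N - / 2)
    with (rsum (fun m => cos (INR m * t)) N) by ring.
  apply (is_derive_rsum (fun m t => sin (INR m * t) / INR m) (fun m t => cos (INR m * t))).
  intros m Hm. pose proof (INR_neq0 m Hm). auto_derive; auto. field. auto.
Qed.

Lemma cos_quad_sum_PI (N : nat) : cos_quad_sum N PI = 0.
Proof. unfold cos_quad_sum. induction N; cbn [rsum]; [reflexivity |]. rewrite IHN. unfold Rdiv. ring. Qed.

Lemma sin_sum_PI (N : nat) : sin_sum N PI = 0.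
Proof.
  unfold sin_sum. induction N; cbn [rsum]; [reflexivity |].
  rewrite IHN, sin_INR_mult_PI. unfold Rdiv. ring.
Qed.

(* The limit of [cos_quad_sum N t] on [0, PI] is (PI - t)^2 / 4. *)
Definition quad_err (N : nat) (t : R) : R := cos_quad_sum N t - (PI - t) ^ 2 / 4.

Lemma continuous_dirichlet_moment (N : nat) (th s : R) :
  continuous (fun s => (s - th) * dirichlet N s) s.
Proof.
  apply (continuous_mult (fun s => s - th) (dirichlet N)); [| apply continuous_dirichlet].
  apply continuous_of_ex_derive. auto_derive. auto.
Qed.

Lemma ex_RInt_dirichlet_moment (N : nat) (th a b : R) :
  ex_RInt (fun s => (s - th) * dirichlet N s) a b.
Proof.
  apply (ex_RInt_continuous (V := R_CompleteNormedModule)).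
  intros; apply continuous_dirichlet_moment.
Qed.

(* Two integrations by parts, using [sin_sum] as the antiderivative of [dirichlet N - 1/2]. *)
Lemma quad_err_RInt (N : nat) (th : R) :
  quad_err N th = - RInt (fun s => (s - th) * dirichlet N s) th PI.
Proof.
  set (Psi := fun s => quad_err N s - (s - th) * (- sin_sum N s + (PI - s) / 2)).
  assert (H : is_RInt (fun s => (s - th) * dirichlet N s) th PI (minus (Psi PI) (Psi th))).
  { apply (is_RInt_derive Psi); [| intros; apply continuous_dirichlet_moment].
    intros x _. unfold Psi, quad_err. eapply is_derive_eq.
    - apply (is_derive_minus (V := R_NormedModule)).
      + apply (is_derive_minus (V := R_NormedModule));
          [apply is_derive_cos_quad_sum | auto_derive; auto].
      + apply is_derive_Reals. apply derivable_pt_lim_mult.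
        * apply is_derive_Reals. auto_derive; [exact I | reflexivity].
        * apply derivable_pt_lim_plus.
          -- apply derivable_pt_lim_opp. apply is_derive_Reals, is_derive_sin_sum.
          -- apply is_derive_Reals. auto_derive; [exact I | reflexivity].
    - unfold minus, plus, opp; simpl. field. }
  apply (is_RInt_unique (V := R_CompleteNormedModule)) in H. rewrite H.
  unfold Psi, quad_err. rewrite cos_quad_sum_PI, sin_sum_PI.
  unfold minus, plus, opp; simpl. field.
Qed.

Lemma PI_gt_3 : 3 < PI.
Proof. pose proof PI2_3_2; lra. Qed.

Lemma half_le_sin (x : R) : 0 <= x <= 1 / 2 -> x / 2 <= sin x.
Proof.
  intros H. pose proof PI_gt_3. destruct (SIN x) as [H1 _]; try lra.
  assert (E : sin_lb x = x - x ^ 3 / 6 + x ^ 5 / 120 - x ^ 7 / 5040)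
    by (unfold sin_lb, sin_approx, sin_term; simpl; field).
  rewrite E in H1. assert (x * x <= 1 / 4) by nra. assert (x ^ 3 <= x / 4) by nra.
  assert (0 <= x ^ 5) by (apply pow_le; lra).
  assert (x ^ 7 <= x ^ 3).
  { replace (x ^ 7) with (x ^ 3 * (x * x) ^ 2) by ring. assert ((x * x) ^ 2 <= 1) by nra. nra. }
  lra.
Qed.

Lemma Rabs_div_le (x y X m : R) : 0 < m -> m <= y -> Rabs x <= X -> Rabs (x / y) <= X / m.
Proof.
  intros Hm Hy Hx. unfold Rdiv. rewrite Rabs_mult, Rabs_inv, (Rabs_right y) by lra.
  apply Rmult_le_compat; auto using Rabs_pos.
  - left; apply Rinv_0_lt_compat; lra.
  - apply Rinv_le_contravar; lra.
Qed.

Lemma dirichlet_moment_head (N : nat) (th a : R) : 0 <= th <= a -> a <= 1 ->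
  Rabs (RInt (fun s => (s - th) * dirichlet N s) th a) <= (a - th) * 2.
Proof.
  intros H1 H2. apply abs_RInt_le_const; [lra | apply ex_RInt_dirichlet_moment |].
  intros s Hs. destruct (Req_dec s 0) as [E | E].
  { subst. replace th with 0 by lra. rewrite Rminus_0_r, Rmult_0_l, Rabs_R0. lra. }
  assert (s / 2 / 2 <= sin (s / 2)) by (apply half_le_sin; lra).
  rewrite dirichlet_eq by lra.
  replace ((s - th) * (sin ((INR N + / 2) * s) / (2 * sin (s / 2))))
    with ((s - th) * sin ((INR N + / 2) * s) / (2 * sin (s / 2))) by (field; lra).
  apply Rle_trans with (s / (s / 2)); [apply Rabs_div_le; try lra | right; field; lra].
  rewrite Rabs_mult, (Rabs_right (s - th)) by lra.
  pose proof (SIN_bound ((INR N + / 2) * s)).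
  apply Rle_trans with ((s - th) * 1); [apply Rmult_le_compat_l; [lra | apply Rabs_le; lra] | lra].
Qed.

Lemma Rabs_mult_cos_div_le (h t w H : R) : 0 < w -> Rabs h <= H -> Rabs (h * cos t / w) <= H / w.
Proof.
  intros Hw Hh. apply Rabs_div_le; [lra | lra |].
  rewrite Rabs_mult. pose proof (COS_bound t).
  apply Rle_trans with (Rabs h * 1); [| lra].
  apply Rmult_le_compat_l; [apply Rabs_pos | apply Rabs_le; lra].
Qed.

Section IntegrationByParts.

Variables (g g' : R -> R) (w a b : R).
Hypothesis w_pos : 0 < w.
Hypothesis a_le_b : a <= b.
Hypothesis g_deriv : forall s, a <= s <= b -> is_derive g s (g' s).
Hypothesis g'_cont : forall s, a <= s <= b -> continuous g' s.

Lemma in_Rmin_Rmax (s : R) : Rmin a b <= s <= Rmax a b -> a <= s <= b.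
Proof. now rewrite Rmin_left, Rmax_right. Qed.

Lemma continuous_mult_cos_div (s : R) : a <= s <= b -> continuous (fun s => g' s * cos (w * s) / w) s.
Proof.
  intros Hs. apply (continuous_mult (fun s => g' s * cos (w * s)) (fun _ => / w)); [| apply continuous_const].
  apply (continuous_mult g'); [auto | apply continuous_of_ex_derive; auto_derive; auto].
Qed.

Lemma RInt_mult_sin_parts :
  RInt (fun s => g s * sin (w * s)) a b =
  - g b * cos (w * b) / w + g a * cos (w * a) / w + RInt (fun s => g' s * cos (w * s) / w) a b.
Proof.
  set (Phi := fun s => - g s * cos (w * s) / w).
  set (k := fun s => g' s * cos (w * s) / w).
  assert (Ipart : is_RInt (fun s => g s * sin (w * s) - k s) a b (minus (Phi b) (Phi a))).
  { apply (is_RInt_derive Phi); intros s Hs; apply in_Rmin_Rmax in Hs.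
    - unfold Phi, k. eapply is_derive_eq.
      + apply is_derive_Reals. apply derivable_pt_lim_div; [| apply derivable_pt_lim_const | lra].
        apply derivable_pt_lim_mult.
        * apply derivable_pt_lim_opp, is_derive_Reals, g_deriv, Hs.
        * apply is_derive_Reals. auto_derive; [exact I | reflexivity].
      + unfold Rsqr. field. lra.
    - apply (continuous_minus (fun s => g s * sin (w * s)) k); [| apply continuous_mult_cos_div, Hs].
      apply (continuous_mult g).
      + apply continuous_of_ex_derive. exists (g' s). auto.
      + apply continuous_of_ex_derive. auto_derive. auto. }
  assert (Ik : ex_RInt k a b).
  { apply (ex_RInt_continuous (V := R_CompleteNormedModule)).
    intros s Hs. apply continuous_mult_cos_div, in_Rmin_Rmax, Hs. }
  apply (is_RInt_unique (V := R_CompleteNormedModule)).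
  replace (- g b * cos (w * b) / w + g a * cos (w * a) / w + RInt k a b)
    with (plus (minus (Phi b) (Phi a)) (RInt k a b)) by (unfold minus, plus, opp, Phi; simpl; lra).
  eapply is_RInt_ext; [| exact (is_RInt_plus _ _ _ _ _ _ Ipart (RInt_correct _ _ _ Ik))].
  intros s _. unfold plus; simpl. ring.
Qed.

Lemma RInt_mult_sin_bound (G G' : R) :
  (forall s, a <= s <= b -> Rabs (g s) <= G) ->
  (forall s, a <= s <= b -> Rabs (g' s) <= G') ->
  Rabs (RInt (fun s => g s * sin (w * s)) a b) <= (2 * G + (b - a) * G') / w.
Proof.
  intros Bg Bg'. rewrite RInt_mult_sin_parts.
  assert (Bk : Rabs (RInt (fun s => g' s * cos (w * s) / w) a b) <= (b - a) * (G' / w)).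
  { apply abs_RInt_le_const; [lra | |].
    - apply (ex_RInt_continuous (V := R_CompleteNormedModule)).
      intros s Hs. apply continuous_mult_cos_div, in_Rmin_Rmax, Hs.
    - intros s Hs. apply Rabs_mult_cos_div_le; auto. }
  assert (Ba : Rabs (g a * cos (w * a) / w) <= G / w) by (apply Rabs_mult_cos_div_le; auto; apply Bg; lra).
  assert (Bb : Rabs (- g b * cos (w * b) / w) <= G / w)
    by (apply Rabs_mult_cos_div_le; auto; rewrite Rabs_Ropp; apply Bg; lra).
  eapply Rle_trans; [apply Rabs_triang |].
  eapply Rle_trans; [apply Rplus_le_compat; [apply Rabs_triang | exact Bk] |].
  apply Rle_trans with (G / w + G / w + (b - a) * (G' / w)); [lra |].
  right. field. lra.
Qed.

End IntegrationByParts.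

Definition tail_const (d : R) : R :=
  PI / sin (d / 2) + PI * (/ (2 * sin (d / 2)) + PI / (4 * sin (d / 2) ^ 2)).

Lemma tail_const_ge0 (d : R) : 0 < d <= 1 -> 0 <= tail_const d.
Proof.
  intros Hd. pose proof PI_gt_3. assert (0 < sin (d / 2)) by (apply sin_gt_0; lra).
  assert (0 < sin (d / 2) ^ 2) by (apply pow_lt; lra).
  assert (0 < PI / sin (d / 2)) by (apply Rdiv_lt_0_compat; lra).
  assert (0 < / (2 * sin (d / 2))) by (apply Rinv_0_lt_compat; lra).
  assert (0 < PI / (4 * sin (d / 2) ^ 2)) by (apply Rdiv_lt_0_compat; lra).
  unfold tail_const. nra.
Qed.

(* Away from the singularity of the Dirichlet kernel at 0, integrate by parts against the
   oscillating factor sin ((N + 1/2) s). *)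
Lemma dirichlet_moment_tail (N : nat) (d a th : R) :
  0 < d <= 1 -> d <= a <= PI -> 0 <= th <= a ->
  Rabs (RInt (fun s => (s - th) * dirichlet N s) a PI) <= tail_const d / (INR N + / 2).
Proof.
  intros Hd Ha Hth. pose proof PI_gt_3.
  assert (Hw : 0 < INR N + / 2) by (pose proof (pos_INR N); lra).
  set (sg := sin (d / 2)). assert (Hsg : 0 < sg) by (apply sin_gt_0; lra).
  assert (Hs : forall s, a <= s <= PI -> sg <= sin (s / 2)).
  { intros s Hs. destruct (Req_dec d s); [subst sg; subst; lra |].
    left. apply sin_increasing_1; lra. }
  set (g := fun s => (s - th) / (2 * sin (s / 2))).
  set (g' := fun s => / (2 * sin (s / 2)) - (s - th) * cos (s / 2) / (4 * sin (s / 2) ^ 2)).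
  rewrite (RInt_ext _ (fun s => g s * sin ((INR N + / 2) * s))).
  2: { intros s Hs'. rewrite Rmin_left, Rmax_right in Hs' by lra.
       pose proof (Hs s ltac:(lra)). rewrite dirichlet_eq by lra. unfold g; simpl. field. lra. }
  assert (0 < sg ^ 2) by (apply pow_lt; lra).
  eapply Rle_trans.
  - refine (RInt_mult_sin_bound g g' _ _ _ Hw _ _ _ (PI / (2 * sg)) (/ (2 * sg) + PI / (4 * sg ^ 2)) _ _);
      [lra | ..]; intros s Hs0; pose proof (Hs s Hs0).
    + unfold g, g'. auto_derive; [lra |]. unfold Rdiv in *. field. lra.
    + apply continuous_of_ex_derive. unfold g'. auto_derive. unfold Rdiv in *. repeat split; nra.
    + apply Rabs_div_le; [lra | lra |]. apply Rabs_le; lra.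
    + unfold g'. eapply Rle_trans; [apply Rabs_triang |]. rewrite Rabs_Ropp.
      apply Rplus_le_compat.
      * rewrite Rabs_inv, Rabs_right by lra. apply Rinv_le_contravar; lra.
      * apply Rabs_div_le; [lra | apply Rmult_le_compat_l; [lra | apply pow_incr; lra] |].
        rewrite Rabs_mult. pose proof (COS_bound (s / 2)).
        apply Rle_trans with (Rabs (s - th) * 1).
        -- apply Rmult_le_compat_l; [apply Rabs_pos | apply Rabs_le; lra].
        -- rewrite Rmult_1_r. apply Rabs_le; lra.
  - apply Rmult_le_compat_r; [left; apply Rinv_0_lt_compat; lra |].
    unfold tail_const. fold sg.
    assert (0 <= / (2 * sg) + PI / (4 * sg ^ 2)).
    { apply Rplus_le_le_0_compat; [left; apply Rinv_0_lt_compat; lra |].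
      apply Rmult_le_pos; [lra | left; apply Rinv_0_lt_compat; lra]. }
    assert ((PI - a) * (/ (2 * sg) + PI / (4 * sg ^ 2)) <= PI * (/ (2 * sg) + PI / (4 * sg ^ 2)))
      by (apply Rmult_le_compat_r; lra).
    replace (2 * (PI / (2 * sg))) with (PI / sg) by (field; lra). lra.
Qed.

Lemma quad_err_unif (eps : R) : 0 < eps ->
  exists N0, forall N, (N0 <= N)%nat -> forall th, 0 <= th <= PI -> Rabs (quad_err N th) <= eps.
Proof.
  intros He. pose proof PI_gt_3.
  set (d := Rmin 1 (eps / 4)).
  assert (Hd : 0 < d <= 1) by (unfold d; split; [apply Rmin_glb_lt; lra | apply Rmin_l]).
  assert (Hd2 : d <= eps / 4) by apply Rmin_r.
  pose proof (tail_const_ge0 d Hd) as HC. set (C := tail_const d) in *.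
  destruct (archimed_cor1 (eps / (2 * (C + 1)))) as [N0 [HN0 HN0p]];
    [apply Rdiv_lt_0_compat; lra |].
  exists N0. intros N HN th Hth.
  assert (Htail : forall a, d <= a <= PI -> 0 <= th <= a ->
            Rabs (RInt (fun s => (s - th) * dirichlet N s) a PI) <= eps / 2).
  { intros a Ha Hta. eapply Rle_trans; [apply (dirichlet_moment_tail N d a th); auto |].
    fold C. assert (0 < INR N0) by (apply lt_0_INR; lia).
    assert (INR N0 <= INR N) by (apply le_INR; auto).
    assert (/ (INR N + / 2) <= / INR N0) by (apply Rinv_le_contravar; lra).
    apply Rle_trans with (C * / INR N0); [apply Rmult_le_compat_l; auto |].
    apply Rle_trans with ((C + 1) * (eps / (2 * (C + 1)))).
    - apply Rle_trans with (C * (eps / (2 * (C + 1)))); [apply Rmult_le_compat_l; lra |].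
      apply Rmult_le_compat_r; [apply Rlt_le, Rdiv_lt_0_compat |]; lra.
    - right; field; lra. }
  rewrite quad_err_RInt, Rabs_Ropp. destruct (Rle_dec d th) as [Hdt | Hdt].
  - apply Rle_trans with (eps / 2); [apply Htail |]; lra.
  - rewrite <- (RInt_Chasles _ th d PI) by apply ex_RInt_dirichlet_moment.
    unfold plus; simpl. eapply Rle_trans; [apply Rabs_triang |].
    pose proof (dirichlet_moment_head N th d ltac:(lra) ltac:(lra)).
    pose proof (Htail d ltac:(lra) ltac:(lra)). lra.
Qed.

Definition Cnorm1 (z : Cplx) : R := Rabs (fst z) + Rabs (snd z).

Lemma Cnorm1_ge0 (z : Cplx) : 0 <= Cnorm1 z.
Proof. unfold Cnorm1. pose proof (Rabs_pos (fst z)). pose proof (Rabs_pos (snd z)). lra. Qed.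

Lemma Cnorm1_add (z w : Cplx) : Cnorm1 (Cadd z w) <= Cnorm1 z + Cnorm1 w.
Proof.
  destruct z, w; unfold Cnorm1; simpl.
  pose proof (Rabs_triang r r1). pose proof (Rabs_triang r0 r2). lra.
Qed.

Lemma Cnorm1_opp (z : Cplx) : Cnorm1 (Copp z) = Cnorm1 z.
Proof. destruct z; unfold Cnorm1; simpl. now rewrite !Rabs_Ropp. Qed.

Lemma Cnorm1_sub (z w : Cplx) : Cnorm1 (Csub z w) <= Cnorm1 z + Cnorm1 w.
Proof. rewrite <- (Cnorm1_opp w). apply Cnorm1_add. Qed.

Lemma Cnorm1_mul (z w : Cplx) : Cnorm1 (Cmul z w) <= Cnorm1 z * Cnorm1 w.
Proof.
  destruct z as [a b], w as [c d]; unfold Cnorm1; simpl.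
  pose proof (Rabs_triang (a * c) (- (b * d))) as T1. pose proof (Rabs_triang (a * d) (b * c)) as T2.
  rewrite Rabs_Ropp in T1. rewrite !Rabs_mult in T1, T2.
  pose proof (Rabs_pos a); pose proof (Rabs_pos b); pose proof (Rabs_pos c); pose proof (Rabs_pos d).
  unfold Rminus. nra.
Qed.

Lemma Cnorm1_RtoC (x : R) : Cnorm1 (RtoC x) = Rabs x.
Proof. unfold Cnorm1, RtoC; simpl. rewrite Rabs_R0; ring. Qed.

Lemma Rabs_Im_sub_le (z w : Cplx) : Rabs (snd z - snd w) <= Cnorm1 (Csub z w).
Proof. destruct z, w; unfold Cnorm1; simpl. pose proof (Rabs_pos (r + - r1)). unfold Rminus. lra. Qed.

Lemma exp_le (x y : R) : x <= y -> exp x <= exp y.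
Proof. intros [H | H]; [left; apply exp_increasing; exact H | subst; lra]. Qed.

Lemma Cnorm1_Ccos_le (z : Cplx) : Cnorm1 (Ccos z) <= 2 * exp (Rabs (snd z)).
Proof.
  destruct z as [a b]; unfold Cnorm1, Ccos; simpl. rewrite Rabs_Ropp, !Rabs_mult.
  assert (exp b <= exp (Rabs b)) by (apply exp_le, Rle_abs).
  assert (exp (- b) <= exp (Rabs b)) by (apply exp_le; rewrite <- Rabs_Ropp; apply Rle_abs).
  pose proof (exp_pos b). pose proof (exp_pos (- b)).
  assert (Rabs (cosh b) <= exp (Rabs b)) by (unfold cosh; rewrite Rabs_right; lra).
  assert (Rabs (sinh b) <= exp (Rabs b)) by (unfold sinh; apply Rabs_le; lra).
  pose proof (COS_bound a). pose proof (SIN_bound a).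
  assert (Rabs (cos a) <= 1) by (apply Rabs_le; lra). assert (Rabs (sin a) <= 1) by (apply Rabs_le; lra).
  pose proof (Rabs_pos (cos a)); pose proof (Rabs_pos (sin a)).
  pose proof (Rabs_pos (cosh b)); pose proof (Rabs_pos (sinh b)). nra.
Qed.

(* The mean value theorem on each component, hence the factor 2. *)
Lemma Cnorm1_sub_le_MVT (F : R -> Cplx) (e : R -> R) (g : R -> Cplx) (a b eps M : R) :
  a <= b -> (forall s, a <= s <= b -> is_Cderive F s (Cmul (RtoC (e s)) (g s))) ->
  (forall s, a <= s <= b -> Rabs (e s) <= eps) -> (forall s, a <= s <= b -> Cnorm1 (g s) <= M) ->
  Cnorm1 (Csub (F b) (F a)) <= 2 * (b - a) * eps * M.
Proof.
  intros Hab HD He Hg.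
  assert (0 <= M) by (eapply Rle_trans; [apply Cnorm1_ge0 | apply (Hg b); lra]).
  assert (0 <= eps) by (eapply Rle_trans; [apply Rabs_pos | apply (He b); lra]).
  destruct Hab as [Hab | Hab].
  2: { subst. unfold Cnorm1; simpl. rewrite !Rplus_opp_r, Rabs_R0. nra. }
  destruct (MVT_cor2 (fun t => fst (F t)) (fun t => fst (Cmul (RtoC (e t)) (g t))) a b Hab)
    as [x1 [E1 H1]]; [intros s Hs; apply is_derive_Reals, (HD s Hs) |].
  destruct (MVT_cor2 (fun t => snd (F t)) (fun t => snd (Cmul (RtoC (e t)) (g t))) a b Hab)
    as [x2 [E2 H2]]; [intros s Hs; apply is_derive_Reals, (HD s Hs) |].
  unfold Cnorm1; simpl. fold (fst (F b) - fst (F a)) (snd (F b) - snd (F a)). rewrite E1, E2.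
  simpl. rewrite !Rmult_0_l, !Rminus_0_r, !Rplus_0_r, !Rabs_mult, !(Rabs_right (b - a)) by lra.
  assert (Rabs (e x1) * Rabs (fst (g x1)) <= eps * M).
  { pose proof (Hg x1 ltac:(lra)). unfold Cnorm1 in *. pose proof (Rabs_pos (snd (g x1))).
    apply Rmult_le_compat; auto using Rabs_pos; [apply He |]; lra. }
  assert (Rabs (e x2) * Rabs (snd (g x2)) <= eps * M).
  { pose proof (Hg x2 ltac:(lra)). unfold Cnorm1 in *. pose proof (Rabs_pos (fst (g x2))).
    apply Rmult_le_compat; auto using Rabs_pos; [apply He |]; lra. }
  nra.
Qed.

(** * The series of cos (m t) / (m^2 - b) *)

Definition resolvent (b : Cplx) (m : nat) : Cplx := Cinv (Csub (RtoC (INR m ^ 2)) b).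

Section CosResolventSeries.

Variables b c : Cplx.
Hypothesis c_sq : Cmul c c = b.
Hypothesis Im_b_neq0 : snd b <> 0.

Definition cos_res_sum (N : nat) (t : R) : Cplx :=
  Csum (fun m => Cscal (cos (INR m * t)) (resolvent b m)) N.

Definition quad_res_sum (N : nat) (t : R) : Cplx :=
  Csum (fun m => Cscal ((cos (INR m * t) - cos (INR m * PI)) / INR m ^ 2) (resolvent b m)) N.

Definition dquad_res_sum (N : nat) (t : R) : Cplx :=
  Csum (fun m => Cscal (- sin (INR m * t) / INR m) (resolvent b m)) N.

Lemma b_neq0 : b <> C0.
Proof. intros E. apply Im_b_neq0. now rewrite E. Qed.

Lemma c_neq0 : c <> C0.
Proof. intros E. apply b_neq0. rewrite <- c_sq, E. unfold C0; Cplx_ring. Qed.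

(* From 1/(m^2 - b) = 1/m^2 + b / (m^2 (m^2 - b)). *)
Lemma cos_res_sum_split (N : nat) (t : R) :
  cos_res_sum N t = Cadd (Cadd (cos_res_sum N PI) (RtoC (cos_quad_sum N t))) (Cmul b (quad_res_sum N t)).
Proof.
  unfold cos_res_sum, quad_res_sum, cos_quad_sum. induction N; cbn [Csum rsum].
  - unfold C0; Cplx_ring.
  - rewrite IHN. assert (Hm : INR (S N) <> 0) by (apply INR_neq0; lia).
    assert (0 < (INR (S N) ^ 2 - fst b) ^ 2 + snd b ^ 2).
    { pose proof (pow2_ge_0 (INR (S N) ^ 2 - fst b)).
      assert (0 < snd b ^ 2) by (apply pow2_gt_0; auto). lra. }
    destruct b as [b1 b2]. unfold resolvent, Cinv; simpl in *.
    apply Cplx_ext; simpl; field; split; auto; lra.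
Qed.

Lemma is_Cderive_quad_res_sum (N : nat) (t : R) : is_Cderive (quad_res_sum N) t (dquad_res_sum N t).
Proof.
  apply (is_Cderive_Csum (fun m t => Cscal ((cos (INR m * t) - cos (INR m * PI)) / INR m ^ 2) (resolvent b m))
           (fun m t => Cscal (- sin (INR m * t) / INR m) (resolvent b m))).
  intros m Hm. apply is_Cderive_scal. pose proof (INR_neq0 m Hm). auto_derive; auto. field; auto.
Qed.

Lemma is_Cderive_dquad_res_sum (N : nat) (t : R) : is_Cderive (dquad_res_sum N) t (Copp (cos_res_sum N t)).
Proof.
  replace (Copp (cos_res_sum N t)) with (Csum (fun m => Cscal (- cos (INR m * t)) (resolvent b m)) N).
  - apply (is_Cderive_Csum (fun m t => Cscal (- sin (INR m * t) / INR m) (resolvent b m))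
             (fun m t => Cscal (- cos (INR m * t)) (resolvent b m))).
    intros m Hm. apply is_Cderive_scal. pose proof (INR_neq0 m Hm). auto_derive; auto. field; auto.
  - unfold cos_res_sum. induction N; cbn [Csum]; [unfold C0; Cplx_ring |].
    rewrite IHN. destruct (resolvent b (S N)); Cplx_ring.
Qed.

Lemma dquad_res_sum_0 (N : nat) : dquad_res_sum N 0 = C0.
Proof.
  unfold dquad_res_sum. induction N; cbn [Csum]; [reflexivity |]. rewrite IHN, Rmult_0_r, sin_0.
  destruct (resolvent b (S N)). unfold C0; apply Cplx_ext; simpl; unfold Rdiv; ring.
Qed.

Lemma dquad_res_sum_PI (N : nat) : dquad_res_sum N PI = C0.
Proof.
  unfold dquad_res_sum. induction N; cbn [Csum]; [reflexivity |]. rewrite IHN, sin_INR_mult_PI.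
  destruct (resolvent b (S N)). unfold C0; apply Cplx_ext; simpl; unfold Rdiv; ring.
Qed.

Definition ccos0 (t : R) : Cplx := Ccos (Caffine c C0 t).
Definition csin0 (t : R) : Cplx := Csin (Caffine c C0 t).
Definition ccosPI (t : R) : Cplx := Ccos (Caffine c (Cscal (- PI) c) t).
Definition csinPI (t : R) : Cplx := Csin (Caffine c (Cscal (- PI) c) t).

(* A particular solution of  P'' + b P = - K - (PI - t)^2 / 4  with P'(PI) = 0, and its derivatives. *)
Definition psol (A K : Cplx) (t : R) : Cplx :=
  Cadd (Cadd (Cadd (Copp (Cmul K (Cinv b))) (Cscal (- (PI - t) ^ 2 / 4) (Cinv b)))
             (Cscal (1 / 2) (Cmul (Cinv b) (Cinv b)))) (Cmul A (ccosPI t)).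
Definition psol1 (A : Cplx) (t : R) : Cplx :=
  Cadd (Cscal ((PI - t) / 2) (Cinv b)) (Copp (Cmul A (Cmul c (csinPI t)))).
Definition psol2 (A : Cplx) (t : R) : Cplx :=
  Cadd (Cscal (- / 2) (Cinv b)) (Copp (Cmul A (Cmul c (Cmul c (ccosPI t))))).

Lemma is_Cderive_psol (A K : Cplx) (t : R) : is_Cderive (psol A K) t (psol1 A t).
Proof.
  eapply is_Cderive_eq.
  - apply is_Cderive_plus; [apply is_Cderive_plus; [apply is_Cderive_plus |] |].
    + apply is_Cderive_const.
    + apply is_Cderive_scal. auto_derive; auto.
    + apply is_Cderive_const.
    + apply is_Cderive_mult_l, is_Cderive_cos_affine.
  - fold (csinPI t). unfold psol1, C0.
    apply Cplx_ext; destruct c, A, (Cinv b), (csinPI t); simpl; field.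
Qed.

Lemma is_Cderive_psol1 (A : Cplx) (t : R) : is_Cderive (psol1 A) t (psol2 A t).
Proof.
  eapply is_Cderive_eq.
  - apply is_Cderive_plus.
    + apply is_Cderive_scal. auto_derive; auto.
    + apply is_Cderive_opp, is_Cderive_mult_l, is_Cderive_mult_l, is_Cderive_sin_affine.
  - fold (ccosPI t). unfold psol2. apply Cplx_ext; destruct c, A, (Cinv b), (ccosPI t); simpl; field.
Qed.

Lemma psol_ode (A K : Cplx) (t : R) :
  Cadd (psol2 A t) (Cmul b (psol A K t)) = Copp (Cadd K (RtoC ((PI - t) ^ 2 / 4))).
Proof.
  pose proof b_neq0 as Hb. pose proof c_neq0 as Hc. unfold psol, psol2.
  rewrite !Cscal_RtoC, <- c_sq.
  replace (RtoC (- (PI - t) ^ 2 / 4)) with (Copp (RtoC ((PI - t) ^ 2 / 4)))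
    by (apply Cplx_ext; simpl; field).
  replace (RtoC (- / 2)) with (Copp (Cinv (Cadd C1 C1))) by (apply Cplx_ext; simpl; field).
  replace (RtoC (1 / 2)) with (Cinv (Cadd C1 C1)) by (apply Cplx_ext; simpl; field).
  rewrite <- c_sq in Hb. field. split; [exact Hc |].
  unfold C0; intros E; inversion E; lra.
Qed.

Definition defect (A : Cplx) (N : nat) (t : R) : Cplx :=
  Csub (quad_res_sum N t) (psol A (cos_res_sum N PI) t).
Definition defect1 (A : Cplx) (N : nat) (t : R) : Cplx := Csub (dquad_res_sum N t) (psol1 A t).
Definition defect2 (A : Cplx) (N : nat) (t : R) : Cplx := Csub (Copp (cos_res_sum N t)) (psol2 A t).

Lemma is_Cderive_defect (A : Cplx) (N : nat) (t : R) : is_Cderive (defect A N) t (defect1 A N t).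
Proof. apply is_Cderive_minus; [apply is_Cderive_quad_res_sum | apply is_Cderive_psol]. Qed.

Lemma is_Cderive_defect1 (A : Cplx) (N : nat) (t : R) : is_Cderive (defect1 A N) t (defect2 A N t).
Proof. apply is_Cderive_minus; [apply is_Cderive_dquad_res_sum | apply is_Cderive_psol1]. Qed.

Lemma defect_ode (A : Cplx) (N : nat) (t : R) :
  Cadd (defect2 A N t) (Cmul b (defect A N t)) = Copp (RtoC (quad_err N t)).
Proof.
  pose proof (psol_ode A (cos_res_sum N PI) t) as E.
  unfold defect2, defect, quad_err. rewrite cos_res_sum_split at 1. rewrite RtoC_minus.
  set (P2 := psol2 A t) in *. set (P := psol A (cos_res_sum N PI) t) in *.
  replace P2 with (Csub (Copp (Cadd (cos_res_sum N PI) (RtoC ((PI - t) ^ 2 / 4)))) (Cmul b P))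
    by (rewrite <- E; unfold Csub; ring).
  unfold Csub. ring.
Qed.

(* Variation of constants, started at 0 and at PI respectively. *)
Definition wronsk0 (A : Cplx) (N : nat) (t : R) : Cplx :=
  Csub (Cmul (defect A N t) (Copp (Cmul c (csin0 t)))) (Cmul (defect1 A N t) (ccos0 t)).
Definition wronskPI (A : Cplx) (N : nat) (t : R) : Cplx :=
  Csub (Cmul (defect A N t) (Copp (Cmul c (csinPI t)))) (Cmul (defect1 A N t) (ccosPI t)).

Lemma is_Cderive_wronsk0 (A : Cplx) (N : nat) (t : R) :
  is_Cderive (wronsk0 A N) t (Cmul (RtoC (quad_err N t)) (ccos0 t)).
Proof.
  eapply is_Cderive_eq.
  - apply is_Cderive_minus; apply is_Cderive_mult.
    + apply is_Cderive_defect.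
    + apply is_Cderive_opp, is_Cderive_mult_l, is_Cderive_sin_affine.
    + apply is_Cderive_defect1.
    + apply is_Cderive_cos_affine.
  - fold (ccos0 t) (csin0 t).
    transitivity (Cmul (Copp (Cadd (defect2 A N t) (Cmul (Cmul c c) (defect A N t)))) (ccos0 t));
      [unfold Csub; ring |].
    rewrite c_sq, defect_ode. ring.
Qed.

Lemma is_Cderive_wronskPI (A : Cplx) (N : nat) (t : R) :
  is_Cderive (wronskPI A N) t (Cmul (RtoC (quad_err N t)) (ccosPI t)).
Proof.
  eapply is_Cderive_eq.
  - apply is_Cderive_minus; apply is_Cderive_mult.
    + apply is_Cderive_defect.
    + apply is_Cderive_opp, is_Cderive_mult_l, is_Cderive_sin_affine.
    + apply is_Cderive_defect1.
    + apply is_Cderive_cos_affine.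
  - fold (ccosPI t) (csinPI t).
    transitivity (Cmul (Copp (Cadd (defect2 A N t) (Cmul (Cmul c c) (defect A N t)))) (ccosPI t));
      [unfold Csub; ring |].
    rewrite c_sq, defect_ode. ring.
Qed.

Lemma wronsk_elim (A : Cplx) (N : nat) (t : R) :
  Csub (Cmul (wronsk0 A N t) (ccosPI t)) (Cmul (wronskPI A N t) (ccos0 t)) =
  Copp (Cmul (Cmul c (defect A N t)) (Csin (Cscal PI c))).
Proof.
  replace (Csin (Cscal PI c)) with (Csub (Cmul (csin0 t) (ccosPI t)) (Cmul (ccos0 t) (csinPI t))).
  - unfold wronsk0, wronskPI, Csub. ring.
  - unfold csin0, ccosPI, ccos0, csinPI. rewrite <- Csin_sub. f_equal.
    destruct c; unfold Caffine, C0; Cplx_ring.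
Qed.

Lemma csin0_0 : csin0 0 = C0.
Proof.
  unfold csin0, Caffine, Csin, C0; simpl.
  rewrite !Rmult_0_l, !Rplus_0_l, sin_0, sinh_0. apply Cplx_ext; simpl; ring.
Qed.

Lemma csinPI_PI : csinPI PI = C0.
Proof.
  unfold csinPI, Caffine, Csin, C0; simpl.
  replace (PI * fst c + - PI * fst c) with 0 by ring.
  replace (PI * snd c + - PI * snd c) with 0 by ring.
  rewrite sin_0, sinh_0. apply Cplx_ext; simpl; ring.
Qed.

Lemma csinPI_0 : csinPI 0 = Copp (Csin (Cscal PI c)).
Proof.
  rewrite <- Csin_opp. unfold csinPI. f_equal. destruct c; unfold Caffine; Cplx_ring.
Qed.

Hypothesis sin_PI_c_neq0 : Csin (Cscal PI c) <> C0.

(* The amplitude making [psol1 A 0 = 0]. *)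
Definition psol_amp : Cplx := Cdiv (RtoC (- PI / 2)) (Cmul b (Cmul c (Csin (Cscal PI c)))).

Lemma psol1_amp_0 : psol1 psol_amp 0 = C0.
Proof.
  pose proof b_neq0. pose proof c_neq0.
  unfold psol1, psol_amp. rewrite csinPI_0, Cscal_RtoC.
  replace (RtoC ((PI - 0) / 2)) with (Copp (RtoC (- PI / 2))) by (apply Cplx_ext; simpl; field).
  unfold Cdiv. field. auto.
Qed.

Lemma psol1_PI (A : Cplx) : psol1 A PI = C0.
Proof.
  unfold psol1. rewrite csinPI_PI. replace ((PI - PI) / 2) with 0 by field.
  destruct (Cinv b), c, A; unfold C0; Cplx_ring.
Qed.

Lemma wronsk0_0 (N : nat) : wronsk0 psol_amp N 0 = C0.
Proof.
  unfold wronsk0, defect1. rewrite csin0_0, dquad_res_sum_0, psol1_amp_0.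
  unfold C0, Csub; Cplx_ring.
Qed.

Lemma wronskPI_PI (A : Cplx) (N : nat) : wronskPI A N PI = C0.
Proof.
  unfold wronskPI, defect1. rewrite csinPI_PI, dquad_res_sum_PI, psol1_PI.
  unfold C0, Csub; Cplx_ring.
Qed.

(* The sum of the series: 1/(2b) - PI cos (c (t - PI)) / (2 c sin (PI c)). *)
Definition res_limit (t : R) : Cplx :=
  Cadd (Cscal (1 / 2) (Cinv b)) (Cmul (Cmul b psol_amp) (ccosPI t)).

Lemma cos_res_sum_decomp (N : nat) (t : R) :
  cos_res_sum N t = Cadd (Cadd (RtoC (quad_err N t)) (Cmul b (defect psol_amp N t))) (res_limit t).
Proof.
  pose proof b_neq0. rewrite cos_res_sum_split at 1.
  unfold defect, res_limit, psol, quad_err. rewrite !Cscal_RtoC, RtoC_minus.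
  replace (RtoC (- (PI - t) ^ 2 / 4)) with (Copp (RtoC ((PI - t) ^ 2 / 4)))
    by (apply Cplx_ext; simpl; field).
  unfold Csub. field. auto.
Qed.

Definition ccos_bound : R := 2 * exp (Rabs (snd c) * PI).

Lemma Cnorm1_ccos0_le (t : R) : 0 <= t <= PI -> Cnorm1 (ccos0 t) <= ccos_bound.
Proof.
  intros H. eapply Rle_trans; [apply Cnorm1_Ccos_le |].
  apply Rmult_le_compat_l; [lra |]. apply exp_le.
  unfold Caffine, C0; simpl. rewrite Rplus_0_r, Rabs_mult, (Rabs_right t) by lra.
  rewrite Rmult_comm. apply Rmult_le_compat_l; [apply Rabs_pos | lra].
Qed.

Lemma Cnorm1_ccosPI_le (t : R) : 0 <= t <= PI -> Cnorm1 (ccosPI t) <= ccos_bound.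
Proof.
  intros H. eapply Rle_trans; [apply Cnorm1_Ccos_le |].
  apply Rmult_le_compat_l; [lra |]. apply exp_le.
  unfold Caffine; simpl. replace (t * snd c + - PI * snd c) with ((t - PI) * snd c) by ring.
  rewrite Rabs_mult, (Rabs_left1 (t - PI)) by lra.
  rewrite Rmult_comm. apply Rmult_le_compat_l; [apply Rabs_pos | lra].
Qed.

Lemma Cnorm1_defect_le (N : nat) (e t : R) : 0 <= t <= PI ->
  (forall s, 0 <= s <= PI -> Rabs (quad_err N s) <= e) ->
  Cnorm1 (defect psol_amp N t) <=
  4 * PI * e * ccos_bound * ccos_bound * Cnorm1 (Cinv (Cmul c (Csin (Cscal PI c)))).
Proof.
  intros Ht He. pose proof PI_gt_3. pose proof c_neq0.
  set (q := Cinv (Cmul c (Csin (Cscal PI c)))). set (M := ccos_bound).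
  assert (0 <= e) by (eapply Rle_trans; [apply Rabs_pos | apply (He 0); lra]).
  assert (0 <= M) by (eapply Rle_trans; [apply Cnorm1_ge0 | apply (Cnorm1_ccos0_le 0); lra]).
  assert (B0 : Cnorm1 (wronsk0 psol_amp N t) <= 2 * PI * e * M).
  { pose proof (Cnorm1_sub_le_MVT (wronsk0 psol_amp N) (quad_err N) ccos0 0 t e M ltac:(lra)) as K.
    rewrite wronsk0_0 in K. replace (Csub (wronsk0 psol_amp N t) C0) with (wronsk0 psol_amp N t) in K
      by (unfold C0; destruct (wronsk0 psol_amp N t); Cplx_ring).
    eapply Rle_trans; [apply K; intros; [apply is_Cderive_wronsk0 | apply He | apply Cnorm1_ccos0_le]; lra |].
    assert (0 <= e * M) by (apply Rmult_le_pos; lra). nra. }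
  assert (BPI : Cnorm1 (wronskPI psol_amp N t) <= 2 * PI * e * M).
  { pose proof (Cnorm1_sub_le_MVT (wronskPI psol_amp N) (quad_err N) ccosPI t PI e M ltac:(lra)) as K.
    rewrite wronskPI_PI in K.
    replace (Csub C0 (wronskPI psol_amp N t)) with (Copp (wronskPI psol_amp N t)) in K
      by (unfold C0; destruct (wronskPI psol_amp N t); Cplx_ring).
    rewrite Cnorm1_opp in K.
    eapply Rle_trans;
      [apply K; intros; [apply is_Cderive_wronskPI | apply He | apply Cnorm1_ccosPI_le]; lra |].
    assert (0 <= e * M) by (apply Rmult_le_pos; lra). nra. }
  replace (defect psol_amp N t) with
    (Cmul (Copp (Csub (Cmul (wronsk0 psol_amp N t) (ccosPI t)) (Cmul (wronskPI psol_amp N t) (ccos0 t)))) q)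
    by (rewrite wronsk_elim; unfold q; field; split; auto).
  eapply Rle_trans; [apply Cnorm1_mul |]. rewrite Cnorm1_opp.
  apply Rmult_le_compat_r; [apply Cnorm1_ge0 |].
  eapply Rle_trans; [apply Cnorm1_sub |].
  eapply Rle_trans; [apply Rplus_le_compat; apply Cnorm1_mul |].
  pose proof (Cnorm1_ccos0_le t Ht). pose proof (Cnorm1_ccosPI_le t Ht).
  pose proof (Cnorm1_ge0 (wronsk0 psol_amp N t)). pose proof (Cnorm1_ge0 (wronskPI psol_amp N t)).
  pose proof (Cnorm1_ge0 (ccos0 t)). pose proof (Cnorm1_ge0 (ccosPI t)).
  apply Rle_trans with ((2 * PI * e * M) * M + (2 * PI * e * M) * M); [| lra].
  apply Rplus_le_compat; apply Rmult_le_compat; auto.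
Qed.

Lemma cos_res_sum_unif (eps : R) : 0 < eps ->
  exists N0, forall N, (N0 <= N)%nat -> forall t, 0 <= t <= PI ->
  Cnorm1 (Csub (cos_res_sum N t) (res_limit t)) <= eps.
Proof.
  intros Heps. pose proof PI_gt_3.
  set (K := 4 * PI * ccos_bound * ccos_bound * Cnorm1 (Cinv (Cmul c (Csin (Cscal PI c))))).
  assert (HK : 0 <= K).
  { assert (0 < ccos_bound) by (unfold ccos_bound; pose proof (exp_pos (Rabs (snd c) * PI)); lra).
    pose proof (Cnorm1_ge0 (Cinv (Cmul c (Csin (Cscal PI c))))) as Hq.
    unfold K. apply Rmult_le_pos; [| exact Hq].
    apply Rmult_le_pos; [apply Rmult_le_pos |]; lra. }
  set (e := eps / (1 + Cnorm1 b * K)).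
  assert (0 <= Cnorm1 b * K) by (apply Rmult_le_pos; [apply Cnorm1_ge0 | exact HK]).
  assert (He : 0 < e) by (apply Rdiv_lt_0_compat; lra).
  destruct (quad_err_unif e He) as [N0 HN0]. exists N0. intros N HN t Ht.
  rewrite cos_res_sum_decomp.
  replace (Csub (Cadd (Cadd (RtoC (quad_err N t)) (Cmul b (defect psol_amp N t))) (res_limit t))
                (res_limit t))
    with (Cadd (RtoC (quad_err N t)) (Cmul b (defect psol_amp N t))) by (unfold Csub; ring).
  eapply Rle_trans; [apply Cnorm1_add |]. rewrite Cnorm1_RtoC.
  eapply Rle_trans; [apply Rplus_le_compat; [apply (HN0 N HN t Ht) | apply Cnorm1_mul] |].
  pose proof (Cnorm1_defect_le N e t Ht (HN0 N HN)).
  apply Rle_trans with (e + Cnorm1 b * (e * K)).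
  - apply Rplus_le_compat_l, Rmult_le_compat_l; [apply Cnorm1_ge0 |]. unfold K. lra.
  - right. unfold e. field. lra.
Qed.

End CosResolventSeries.

(* [trig_deriv k q r A B] is the k-th derivative of x |-> A cos (q x + r) + B sin (q x + r). *)
Fixpoint trig_coef (k : nat) (q : Cplx) (AB : Cplx * Cplx) : Cplx * Cplx :=
  match k with
  | O => AB
  | S k => let AB' := trig_coef k q AB in (Cmul q (snd AB'), Copp (Cmul q (fst AB')))
  end.

Definition trig_deriv (k : nat) (q r A B : Cplx) (x : R) : Cplx :=
  Cadd (Cmul (fst (trig_coef k q (A, B))) (Ccos (Caffine q r x)))
       (Cmul (snd (trig_coef k q (A, B))) (Csin (Caffine q r x))).

Lemma is_Cderive_trig_deriv (k : nat) (q r A B : Cplx) (x : R) :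
  is_Cderive (trig_deriv k q r A B) x (trig_deriv (S k) q r A B x).
Proof.
  eapply is_Cderive_eq.
  - apply is_Cderive_plus; apply is_Cderive_mult_l;
      [apply is_Cderive_cos_affine | apply is_Cderive_sin_affine].
  - unfold trig_deriv; simpl. destruct (trig_coef k q (A, B)); simpl. ring.
Qed.

Lemma trig_deriv_SS (k : nat) (q r A B : Cplx) (x : R) :
  trig_deriv (S (S k)) q r A B x = Copp (Cmul (Cmul q q) (trig_deriv k q r A B x)).
Proof. unfold trig_deriv; simpl. destruct (trig_coef k q (A, B)); simpl. ring. Qed.

Lemma Caffine_reflect (q : Cplx) (x : R) :
  Caffine (Copp q) (Cscal 2 q) x = Csub (Cscal 2 q) (Caffine q C0 x).
Proof. destruct q; unfold Caffine, C0; Cplx_ring. Qed.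

Lemma Caffine_shift (q : Cplx) (x : R) :
  Caffine q (Cscal 2 q) x = Cadd (Cscal 2 q) (Caffine q C0 x).
Proof. destruct q; unfold Caffine, C0; Cplx_ring. Qed.

Definition Ccontinuous (w : R -> Cplx) (y : R) : Prop :=
  continuous (fun t => fst (w t)) y /\ continuous (fun t => snd (w t)) y.

Lemma Ccontinuous_Ccos_affine (q r : Cplx) (y : R) : Ccontinuous (fun t => Ccos (Caffine q r t)) y.
Proof.
  destruct (is_Cderive_cos_affine q r y) as [H1 H2].
  split; apply continuous_of_ex_derive; eexists; eauto.
Qed.

Lemma Ccontinuous_Csin_affine (q r : Cplx) (y : R) : Ccontinuous (fun t => Csin (Caffine q r t)) y.
Proof.
  destruct (is_Cderive_sin_affine q r y) as [H1 H2].
  split; apply continuous_of_ex_derive; eexists; eauto.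
Qed.

Lemma cont_on_I_of_ex_derive (f : R -> R) : (forall x, ex_derive f x) -> cont_on_I f.
Proof.
  intros H x _. destruct (H x) as [l Hl]. apply is_derive_Reals in Hl.
  pose proof (derivable_continuous_pt f x (exist _ l Hl)) as Hc.
  intros eps He. destruct (Hc eps He) as [alp [Ha K]]. exists alp; split; [exact Ha |].
  intros z [_ Hz]. destruct (Req_dec x z) as [<- | Hxz].
  - simpl. unfold R_dist. rewrite Rminus_diag, Rabs_R0. exact He.
  - apply K. split; [split; [exact I | exact Hxz] | exact Hz].
Qed.

Definition CRInt (w : R -> Cplx) (r : R -> R) (a b : R) : Cplx :=
  (RInt (fun y => fst (w y) * r y) a b, RInt (fun y => snd (w y) * r y) a b).

Section ComplexIntegral.

Variables (w : R -> Cplx) (r : R -> R).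
Hypothesis w_cont : forall y, Ccontinuous w y.
Hypothesis r_cont : forall y, continuous r y.

Lemma continuous_fst_mult (y : R) : continuous (fun y => fst (w y) * r y) y.
Proof. apply (continuous_mult (fun y => fst (w y)) r); [apply w_cont | apply r_cont]. Qed.

Lemma continuous_snd_mult (y : R) : continuous (fun y => snd (w y) * r y) y.
Proof. apply (continuous_mult (fun y => snd (w y)) r); [apply w_cont | apply r_cont]. Qed.

Lemma is_RInt_fst_CRInt (a b : R) : is_RInt (fun y => fst (w y) * r y) a b (fst (CRInt w r a b)).
Proof.
  apply (RInt_correct (V := R_CompleteNormedModule)), (ex_RInt_continuous (V := R_CompleteNormedModule)).
  intros; apply continuous_fst_mult.
Qed.

Lemma is_RInt_snd_CRInt (a b : R) : is_RInt (fun y => snd (w y) * r y) a b (snd (CRInt w r a b)).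
Proof.
  apply (RInt_correct (V := R_CompleteNormedModule)), (ex_RInt_continuous (V := R_CompleteNormedModule)).
  intros; apply continuous_snd_mult.
Qed.

Lemma is_derive_RInt_upper (f : R -> R) (a x : R) :
  (forall y, continuous f y) -> is_derive (fun x => RInt f a x) x (f x).
Proof.
  intros Hc. apply (is_derive_RInt (V := R_NormedModule) f _ a x); [| apply Hc].
  exists (mkposreal 1 Rlt_0_1). intros y _.
  apply (RInt_correct (V := R_CompleteNormedModule)), (ex_RInt_continuous (V := R_CompleteNormedModule)).
  intros; apply Hc.
Qed.

Lemma is_derive_RInt_lower (f : R -> R) (b x : R) :
  (forall y, continuous f y) -> is_derive (fun x => RInt f x b) x (- f x).
Proof.
  intros Hc. apply (is_derive_RInt' (V := R_NormedModule) f _ x b); [| apply Hc].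
  exists (mkposreal 1 Rlt_0_1). intros y _.
  apply (RInt_correct (V := R_CompleteNormedModule)), (ex_RInt_continuous (V := R_CompleteNormedModule)).
  intros; apply Hc.
Qed.

Lemma is_Cderive_CRInt_upper (a x : R) :
  is_Cderive (fun x => CRInt w r a x) x (Cmul (RtoC (r x)) (w x)).
Proof.
  replace (Cmul (RtoC (r x)) (w x)) with ((fst (w x) * r x, snd (w x) * r x) : Cplx)
    by (apply Cplx_ext; simpl; ring).
  split; simpl.
  - apply (is_derive_RInt_upper (fun y => fst (w y) * r y)), continuous_fst_mult.
  - apply (is_derive_RInt_upper (fun y => snd (w y) * r y)), continuous_snd_mult.
Qed.

Lemma is_Cderive_CRInt_lower (b x : R) :
  is_Cderive (fun x => CRInt w r x b) x (Copp (Cmul (RtoC (r x)) (w x))).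
Proof.
  replace (Copp (Cmul (RtoC (r x)) (w x))) with ((- (fst (w x) * r x), - (snd (w x) * r x)) : Cplx)
    by (apply Cplx_ext; simpl; ring).
  split; simpl.
  - apply (is_derive_RInt_lower (fun y => fst (w y) * r y)), continuous_fst_mult.
  - apply (is_derive_RInt_lower (fun y => snd (w y) * r y)), continuous_snd_mult.
Qed.

End ComplexIntegral.

Lemma CRInt_point (w : R -> Cplx) (r : R -> R) (a : R) : CRInt w r a a = C0.
Proof. unfold CRInt, C0. now rewrite !RInt_point. Qed.

Lemma is_RInt_Im_lincomb (K : R) (Z u v : Cplx) (w1 w2 : R -> Cplx) (r : R -> R) (a b : R) :
  (forall y, Ccontinuous w1 y) -> (forall y, Ccontinuous w2 y) -> (forall y, continuous r y) ->
  is_RInt (fun y => K * snd (Cmul (Cadd (Cmul u (w1 y)) (Cmul v (w2 y))) Z) * r y) a b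
          (K * snd (Cmul (Cadd (Cmul u (CRInt w1 r a b)) (Cmul v (CRInt w2 r a b))) Z)).
Proof.
  intros H1 H2 Hr.
  pose proof (is_RInt_fst_CRInt w1 r H1 Hr a b) as I1. pose proof (is_RInt_snd_CRInt w1 r H1 Hr a b) as I2.
  pose proof (is_RInt_fst_CRInt w2 r H2 Hr a b) as I3. pose proof (is_RInt_snd_CRInt w2 r H2 Hr a b) as I4.
  set (c1 := K * fst (Cmul u Z)). set (c2 := K * snd (Cmul u Z)).
  set (c3 := K * fst (Cmul v Z)). set (c4 := K * snd (Cmul v Z)).
  replace (K * snd (Cmul (Cadd (Cmul u (CRInt w1 r a b)) (Cmul v (CRInt w2 r a b))) Z))
    with (c1 * snd (CRInt w1 r a b) + c2 * fst (CRInt w1 r a b)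
          + c3 * snd (CRInt w2 r a b) + c4 * fst (CRInt w2 r a b))
    by (unfold c1, c2, c3, c4; destruct u, v, Z, (CRInt w1 r a b), (CRInt w2 r a b); simpl; ring).
  apply (is_RInt_ext (fun y => c1 * (snd (w1 y) * r y) + c2 * (fst (w1 y) * r y)
                               + c3 * (snd (w2 y) * r y) + c4 * (fst (w2 y) * r y))).
  - intros y _. unfold c1, c2, c3, c4. destruct u, v, Z, (w1 y), (w2 y); simpl; ring.
  - apply (is_RInt_plus (V := R_NormedModule));
      [apply (is_RInt_plus (V := R_NormedModule)); [apply (is_RInt_plus (V := R_NormedModule)) |] |];
      apply (is_RInt_scal (V := R_NormedModule)); assumption.
Qed.

(** * Identification of the eigenfunction series *)

Lemma cos_mult_Rabs (r z : R) : cos (r * Rabs z) = cos (r * z).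
Proof.
  destruct (Rle_dec 0 z); [now rewrite Rabs_pos_eq |].
  rewrite Rabs_left by lra. replace (r * - z) with (- (r * z)) by ring. apply cos_neg.
Qed.

Definition angle_diff (x y : R) : R := PI * Rabs (x - y) / 2.
Definition angle_sum (x y : R) : R := PI - PI * Rabs (x + y) / 2.

Lemma angle_diff_range (x y : R) : inI x -> inI y -> 0 <= angle_diff x y <= PI.
Proof.
  unfold inI, angle_diff; intros. pose proof PI_gt_3.
  assert (Rabs (x - y) <= 2) by (apply Rabs_le; lra). pose proof (Rabs_pos (x - y)). split; nra.
Qed.

Lemma angle_sum_range (x y : R) : inI x -> inI y -> 0 <= angle_sum x y <= PI.
Proof.
  unfold inI, angle_sum; intros. pose proof PI_gt_3.
  assert (Rabs (x + y) <= 2) by (apply Rabs_le; lra). pose proof (Rabs_pos (x + y)). split; nra.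
Qed.

Lemma wo_mul_wo (j : nat) (x y : R) : wo (S j) x * wo (S j) y =
  (cos (INR (2 * S j) * angle_diff x y) - cos (INR (2 * S j) * angle_sum x y)) / 2.
Proof.
  unfold wo, angle_diff, angle_sum. rewrite mult_INR. set (K := INR (S j)).
  replace (INR 2 * K * (PI * Rabs (x - y) / 2)) with (K * PI * Rabs (x - y)) by (simpl; field).
  replace (INR 2 * K * (PI - PI * Rabs (x + y) / 2))
    with (- (K * PI * Rabs (x + y)) + 2 * INR (S j) * PI) by (unfold K; simpl; field).
  rewrite cos_period, cos_neg, !cos_mult_Rabs.
  replace (K * PI * (x - y)) with (K * PI * x - K * PI * y) by ring.
  replace (K * PI * (x + y)) with (K * PI * x + K * PI * y) by ring.
  rewrite cos_minus, cos_plus. field.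
Qed.

Lemma we_mul_we (j : nat) (x y : R) : we (S j) x * we (S j) y =
  (cos (INR (S (2 * j)) * angle_diff x y) - cos (INR (S (2 * j)) * angle_sum x y)) / 2.
Proof.
  unfold we, angle_diff, angle_sum. rewrite (S_INR (2 * j)), (mult_INR 2 j), (S_INR j).
  set (K := INR j + 1 - 1 / 2).
  replace ((INR 2 * INR j + 1) * (PI * Rabs (x - y) / 2)) with (K * PI * Rabs (x - y))
    by (unfold K; simpl; field).
  replace ((INR 2 * INR j + 1) * (PI - PI * Rabs (x + y) / 2))
    with (PI - K * PI * Rabs (x + y) + 2 * INR j * PI) by (unfold K; simpl; field).
  rewrite cos_period, Rtrigo_facts.cos_pi_minus, !cos_mult_Rabs.
  replace (K * PI * (x - y)) with (K * PI * x - K * PI * y) by ring.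
  replace (K * PI * (x + y)) with (K * PI * x + K * PI * y) by ring.
  rewrite cos_minus, cos_plus. field.
Qed.

Section Kernel.

Variables D nu Rr : R.
Hypothesis D_pos : 0 < D.
Hypothesis nu_pos : 0 < nu.
Hypothesis discr_neg : discr D nu Rr < 0.

(* The eigenvalue at frequency mu PI is D nu PI^4 / 16 |(2 mu)^2 - res_param|^2. *)
Definition res_param : Cplx := Cscal (4 / PI ^ 2) (pplus2 D nu Rr).
Definition res_scale : R := 4 / (PI ^ 2 * D * nu * snd (pplus2 D nu Rr)).

Lemma sqrt_discr_pos : 0 < sqrt (4 * D * nu * (1 + D * Rr) - D ^ 2).
Proof. unfold discr in discr_neg. apply sqrt_lt_R0. lra. Qed.

Lemma Im_pplus2_pos : 0 < snd (pplus2 D nu Rr).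
Proof.
  unfold pplus2; simpl. pose proof sqrt_discr_pos.
  apply Rmult_lt_0_compat; auto. apply Rdiv_lt_0_compat; [lra | nra].
Qed.

Lemma pplus2_char :
  Cadd (Cadd (RtoC (1 + D * Rr)) (Copp (Cmul (RtoC D) (pplus2 D nu Rr))))
       (Cmul (RtoC (D * nu)) (Cmul (pplus2 D nu Rr) (pplus2 D nu Rr))) = C0.
Proof.
  assert (HX : 0 <= 4 * D * nu * (1 + D * Rr) - D ^ 2) by (unfold discr in discr_neg; lra).
  pose proof (sqrt_sqrt _ HX) as ES. unfold pplus2.
  set (S := sqrt (4 * D * nu * (1 + D * Rr) - D ^ 2)) in *.
  unfold C0; apply Cplx_ext; simpl.
  - field_simplify; try lra. replace (S ^ 2) with (S * S) by ring. rewrite ES. field. lra.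
  - field. lra.
Qed.

Lemma Im_res_param_neq0 : snd res_param <> 0.
Proof.
  unfold res_param, Cscal; cbn [snd]. pose proof Im_pplus2_pos. pose proof PI_gt_3.
  assert (0 < 4 / PI ^ 2) by (apply Rdiv_lt_0_compat; [lra | apply pow_lt; lra]).
  apply Rgt_not_eq, Rmult_lt_0_compat; assumption.
Qed.

Lemma inv_eigenvalue_eq (mu : R) :
  / (1 + D * Rr - D * PI ^ 2 * mu ^ 2 + D * nu * PI ^ 4 * mu ^ 4) =
  res_scale * snd (Cinv (Csub (RtoC ((2 * mu) ^ 2)) res_param)).
Proof.
  pose proof sqrt_discr_pos as HS. pose proof PI_gt_3.
  assert (HX : 0 <= 4 * D * nu * (1 + D * Rr) - D ^ 2) by (unfold discr in discr_neg; lra).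
  pose proof (sqrt_sqrt _ HX) as ES. set (S := sqrt (4 * D * nu * (1 + D * Rr) - D ^ 2)) in *.
  unfold res_scale, res_param, pplus2, Cinv; cbn [fst snd Csub Cadd Copp RtoC Cscal]. fold S.
  set (m2 := (2 * mu) ^ 2).
  set (u := m2 + - (4 / PI ^ 2 * (1 / (2 * nu)))).
  set (v := 0 + - (4 / PI ^ 2 * (1 / (2 * D * nu) * S))).
  assert (E : 1 + D * Rr - D * PI ^ 2 * mu ^ 2 + D * nu * PI ^ 4 * mu ^ 4 =
              D * nu * PI ^ 4 / 16 * (u ^ 2 + v ^ 2)).
  { unfold u, v, m2. field_simplify; try lra. replace (S ^ 2) with (S * S) by ring. rewrite ES. field. lra. }
  rewrite E. unfold v in *. field. repeat split; try lra.
  pose proof (pow2_ge_0 (u * (PI ^ 2 * (2 * D * nu)))). nra.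
Qed.

Definition kernel_coef (x y : R) (m : nat) : R :=
  (cos (INR m * angle_diff x y) - cos (INR m * angle_sum x y)) * snd (resolvent res_param m).

Lemma series_term_eq (x y : R) (j : nat) :
  series_term D nu Rr x y (S j) =
  res_scale / 2 * (kernel_coef x y (S (2 * j)) + kernel_coef x y (2 * S j)).
Proof.
  unfold series_term, kernel_coef, Rdiv at 1 2. rewrite wo_mul_wo, we_mul_we. unfold lamo, lame.
  rewrite (inv_eigenvalue_eq (INR (S j))), (inv_eigenvalue_eq (INR (S j) - 1 / 2)).
  unfold resolvent.
  assert (E2 : INR 2 = 2) by (simpl; ring).
  replace ((2 * INR (S j)) ^ 2) with (INR (2 * S j) ^ 2) by (rewrite mult_INR, E2; ring).
  replace ((2 * (INR (S j) - 1 / 2)) ^ 2) with (INR (S (2 * j)) ^ 2)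
    by (rewrite (S_INR (2 * j)), (mult_INR 2 j), (S_INR j), E2; field).
  field.
Qed.

Lemma series_partial_sum_eq (x y : R) (N : nat) :
  sum_f_R0 (fun n => series_term D nu Rr x y (S n)) N =
  res_scale / 2 * (snd (cos_res_sum res_param (2 * N + 2) (angle_diff x y))
                   - snd (cos_res_sum res_param (2 * N + 2) (angle_sum x y))).
Proof.
  unfold cos_res_sum. rewrite !Im_Csum. induction N.
  - simpl sum_f_R0. rewrite series_term_eq. unfold kernel_coef. simpl. ring.
  - rewrite tech5, IHN, series_term_eq.
    replace (2 * S N + 2)%nat with (S (S (2 * N + 2))) by lia.
    replace (2 * S (S N))%nat with (S (S (2 * N + 2))) by lia.
    replace (S (2 * S N)) with (S (2 * N + 2)) by lia.
    unfold kernel_coef. cbn [rsum Cscal snd]. ring.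
Qed.

Lemma Im_pplus2_sub_pminus2 : Im (Csub (pplus2 D nu Rr) (pminus2 D nu Rr)) = 2 * snd (pplus2 D nu Rr).
Proof. unfold Im, pplus2, pminus2; simpl; ring. Qed.

Variable p : Cplx.
Hypothesis p_sq : Cmul p p = pplus2 D nu Rr.

Lemma p_neq0 : p <> C0.
Proof.
  intros E. pose proof Im_pplus2_pos as H. rewrite <- p_sq, E in H. simpl in H. lra.
Qed.

Lemma Csin_2p_neq0 : Csin (Cscal 2 p) <> C0.
Proof.
  intros E. apply Csin_eq_C0_Im in E. pose proof Im_pplus2_pos as H. rewrite <- p_sq in H.
  destruct p as [p1 p2]; simpl in *. assert (p2 = 0) by lra. subst. lra.
Qed.

Definition green_num (x y : R) : Cplx :=
  Cadd (Copp (Ccos (Csub (Cscal 2 p) (Cscal (Rabs (x - y)) p)))) (Ccos (Cscal (x + y) p)).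
Definition green_den : Cplx := Cinv (Cmul p (Csin (Cscal 2 p))).
Definition green_const : R := 1 / (D * nu * Im (Csub (pplus2 D nu Rr) (pminus2 D nu Rr))).

Lemma Gfun_eq (x y : R) : Gfun D nu Rr p x y = green_const * snd (Cmul (green_num x y) green_den).
Proof. reflexivity. Qed.

Definition res_root : Cplx := Cscal (2 / PI) p.

Lemma res_root_sq : Cmul res_root res_root = res_param.
Proof.
  unfold res_param. rewrite <- p_sq. pose proof PI_neq0.
  unfold res_root; apply Cplx_ext; simpl; field; auto.
Qed.

Lemma Csin_PI_res_root : Csin (Cscal PI res_root) = Csin (Cscal 2 p).
Proof. pose proof PI_neq0. f_equal. unfold res_root; apply Cplx_ext; simpl; field; auto. Qed.

Lemma ccosPI_angle_diff (x y : R) :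
  ccosPI res_root (angle_diff x y) = Ccos (Csub (Cscal 2 p) (Cscal (Rabs (x - y)) p)).
Proof.
  pose proof PI_neq0. unfold ccosPI, angle_diff. rewrite <- Ccos_opp. f_equal.
  unfold Caffine, res_root; apply Cplx_ext; simpl; field; auto.
Qed.

Lemma ccosPI_angle_sum (x y : R) : ccosPI res_root (angle_sum x y) = Ccos (Cscal (x + y) p).
Proof.
  pose proof PI_neq0. unfold ccosPI, angle_sum. rewrite <- Ccos_scal_Rabs, <- Ccos_opp. f_equal.
  unfold Caffine, res_root; apply Cplx_ext; simpl; field; auto.
Qed.

Lemma res_param_mul_psol_amp :
  Cmul res_param (psol_amp res_param res_root) = Cmul (RtoC (- PI ^ 2 / 4)) green_den.
Proof.
  pose proof PI_gt_3. pose proof Csin_2p_neq0. pose proof p_neq0.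
  assert (res_param <> C0) by (intros E; apply Im_res_param_neq0; now rewrite E).
  assert (RtoC (2 / PI) <> C0).
  { unfold RtoC, C0; intros E; injection E as E.
    assert (0 < 2 / PI) by (apply Rdiv_lt_0_compat; lra). lra. }
  unfold psol_amp, green_den. rewrite Csin_PI_res_root. unfold res_root. rewrite Cscal_RtoC.
  replace (RtoC (- PI / 2)) with (Cmul (RtoC (- PI ^ 2 / 4)) (RtoC (2 / PI)))
    by (apply Cplx_ext; simpl; field; lra).
  unfold Cdiv. field. repeat split; auto.
Qed.

Lemma Im_res_limit_sub (b c : Cplx) (t1 t2 : R) :
  snd (res_limit b c t1) - snd (res_limit b c t2) =
  snd (Cmul (Cmul b (psol_amp b c)) (Csub (ccosPI c t1) (ccosPI c t2))).
Proof.
  unfold res_limit. destruct (Cmul b (psol_amp b c)), (ccosPI c t1), (ccosPI c t2), (Cscal (1 / 2) (Cinv b)).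
  simpl; ring.
Qed.

Lemma res_limit_Gfun (x y : R) :
  res_scale / 2 * (snd (res_limit res_param res_root (angle_diff x y))
                   - snd (res_limit res_param res_root (angle_sum x y))) = Gfun D nu Rr p x y.
Proof.
  pose proof Im_pplus2_pos. pose proof PI_gt_3.
  rewrite Im_res_limit_sub, res_param_mul_psol_amp, ccosPI_angle_diff, ccosPI_angle_sum, Gfun_eq.
  replace (Cmul (Cmul (RtoC (- PI ^ 2 / 4)) green_den)
             (Csub (Ccos (Csub (Cscal 2 p) (Cscal (Rabs (x - y)) p))) (Ccos (Cscal (x + y) p))))
    with (Cmul (RtoC (PI ^ 2 / 4)) (Cmul (green_num x y) green_den)).
  - rewrite Im_RtoC_mul. unfold res_scale, green_const. rewrite Im_pplus2_sub_pminus2. field. lra.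
  - replace (RtoC (- PI ^ 2 / 4)) with (Copp (RtoC (PI ^ 2 / 4))) by (apply Cplx_ext; simpl; field).
    unfold green_num, Csub. ring.
Qed.

Lemma res_scale_pos : 0 < res_scale.
Proof.
  pose proof Im_pplus2_pos. pose proof PI_gt_3. assert (0 < PI ^ 2) by (apply pow_lt; lra).
  unfold res_scale. apply Rdiv_lt_0_compat; [lra |].
  apply Rmult_lt_0_compat; auto. apply Rmult_lt_0_compat; auto. apply Rmult_lt_0_compat; auto.
Qed.

Lemma series_term_sum (x y : R) : inI x -> inI y ->
  infinite_sum (fun n => series_term D nu Rr x y (S n)) (Gfun D nu Rr p x y).
Proof.
  intros Hx Hy eps Heps. pose proof res_scale_pos.
  assert (Hs : Csin (Cscal PI res_root) <> C0) by (rewrite Csin_PI_res_root; apply Csin_2p_neq0).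
  set (e := eps / (2 * (res_scale + 1))).
  assert (He : 0 < e) by (apply Rdiv_lt_0_compat; lra).
  destruct (cos_res_sum_unif res_param res_root res_root_sq Im_res_param_neq0 Hs e He) as [N0 HN0].
  exists N0. intros n Hn. unfold R_dist.
  rewrite series_partial_sum_eq, <- res_limit_Gfun.
  set (N := (2 * n + 2)%nat).
  assert (HN : (N0 <= N)%nat) by (unfold N; lia).
  pose proof (Rle_trans _ _ _ (Rabs_Im_sub_le _ _) (HN0 N HN _ (angle_diff_range x y Hx Hy))) as K1.
  pose proof (Rle_trans _ _ _ (Rabs_Im_sub_le _ _) (HN0 N HN _ (angle_sum_range x y Hx Hy))) as K2.
  set (s1 := snd (cos_res_sum res_param N (angle_diff x y))) in *.
  set (s2 := snd (cos_res_sum res_param N (angle_sum x y))) in *.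
  set (l1 := snd (res_limit res_param res_root (angle_diff x y))) in *.
  set (l2 := snd (res_limit res_param res_root (angle_sum x y))) in *.
  replace (res_scale / 2 * (s1 - s2) - res_scale / 2 * (l1 - l2))
    with (res_scale / 2 * ((s1 - l1) - (s2 - l2))) by ring.
  rewrite Rabs_mult, (Rabs_right (res_scale / 2)) by lra.
  apply Rle_lt_trans with (res_scale / 2 * (e + e)).
  - apply Rmult_le_compat_l; [lra |]. eapply Rle_trans; [apply Rabs_triang |].
    rewrite Rabs_Ropp. lra.
  - replace (res_scale / 2 * (e + e)) with (eps / 2 - e) by (unfold e; field; lra). lra.
Qed.

Section GreenSolution.

Variable r : R -> R.
Hypothesis r_cont : forall y, continuous r y.

Definition cos_p (y : R) : Cplx := Ccos (Caffine p C0 y).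
Definition sin_p (y : R) : Cplx := Csin (Caffine p C0 y).

(* For y <= x (resp. x <= y) the kernel [green_num x y] is
   [lo_cos 0 x * cos_p y + lo_sin 0 x * sin_p y] (resp. with [hi_cos], [hi_sin]);
   the index k differentiates the coefficients k times in x. *)
Definition lo_cos (k : nat) (x : R) : Cplx :=
  Cadd (trig_deriv k p C0 C1 C0 x) (trig_deriv k (Copp p) (Cscal 2 p) (Copp C1) C0 x).
Definition lo_sin (k : nat) (x : R) : Cplx :=
  Cadd (trig_deriv k (Copp p) (Cscal 2 p) C0 C1 x) (trig_deriv k p C0 C0 (Copp C1) x).
Definition hi_cos (k : nat) (x : R) : Cplx :=
  Cadd (trig_deriv k p C0 C1 C0 x) (trig_deriv k p (Cscal 2 p) (Copp C1) C0 x).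
Definition hi_sin (k : nat) (x : R) : Cplx :=
  Cadd (trig_deriv k p (Cscal 2 p) C0 (Copp C1) x) (trig_deriv k p C0 C0 (Copp C1) x).

Definition green_integral (k : nat) (x : R) : Cplx :=
  Cadd (Cadd (Cmul (lo_cos k x) (CRInt cos_p r (-1) x)) (Cmul (lo_sin k x) (CRInt sin_p r (-1) x)))
       (Cadd (Cmul (hi_cos k x) (CRInt cos_p r x 1)) (Cmul (hi_sin k x) (CRInt sin_p r x 1))).

(* The jump across y = x of the k-th x-derivative of the kernel. *)
Definition green_jump (k : nat) (x : R) : Cplx :=
  Csub (Cadd (Cmul (lo_cos k x) (cos_p x)) (Cmul (lo_sin k x) (sin_p x)))
       (Cadd (Cmul (hi_cos k x) (cos_p x)) (Cmul (hi_sin k x) (sin_p x))).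

Lemma is_Cderive_green_integral (k : nat) (x : R) :
  is_Cderive (green_integral k) x (Cadd (green_integral (S k) x) (Cmul (RtoC (r x)) (green_jump k x))).
Proof.
  assert (Hc : forall y, Ccontinuous cos_p y) by (intros; apply Ccontinuous_Ccos_affine).
  assert (Hs : forall y, Ccontinuous sin_p y) by (intros; apply Ccontinuous_Csin_affine).
  eapply is_Cderive_eq.
  - apply is_Cderive_plus; apply is_Cderive_plus; apply is_Cderive_mult.
    + apply is_Cderive_plus; apply is_Cderive_trig_deriv.
    + apply is_Cderive_CRInt_upper; auto.
    + apply is_Cderive_plus; apply is_Cderive_trig_deriv.
    + apply is_Cderive_CRInt_upper; auto.
    + apply is_Cderive_plus; apply is_Cderive_trig_deriv.
    + apply is_Cderive_CRInt_lower; auto.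
    + apply is_Cderive_plus; apply is_Cderive_trig_deriv.
    + apply is_Cderive_CRInt_lower; auto.
  - unfold green_integral, green_jump, lo_cos, lo_sin, hi_cos, hi_sin, Csub. ring.
Qed.

Lemma green_integral_SS (k : nat) (x : R) :
  green_integral (S (S k)) x = Copp (Cmul (Cmul p p) (green_integral k x)).
Proof. unfold green_integral, lo_cos, lo_sin, hi_cos, hi_sin. rewrite !trig_deriv_SS. ring. Qed.

Ltac expand_jump :=
  unfold green_jump, lo_cos, lo_sin, hi_cos, hi_sin, trig_deriv, cos_p, sin_p; cbn [trig_coef fst snd];
  rewrite ?Caffine_reflect, ?Caffine_shift, ?Ccos_sub, ?Csin_sub, ?Ccos_add, ?Csin_add.

Lemma green_jump_0 (x : R) : green_jump 0 x = C0.
Proof. expand_jump. unfold Csub. ring. Qed.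

Lemma green_jump_2 (x : R) : green_jump 2 x = C0.
Proof. expand_jump. unfold Csub. ring. Qed.

Lemma green_jump_1 (x : R) : green_jump 1 x = Copp (Cmul (Cadd p p) (Csin (Cscal 2 p))).
Proof.
  pose proof (Ccos_sq_add_Csin_sq (Caffine p C0 x)) as Hpyth. expand_jump.
  transitivity (Copp (Cmul (Cmul (Cadd p p) (Csin (Cscal 2 p)))
    (Cadd (Cmul (Ccos (Caffine p C0 x)) (Ccos (Caffine p C0 x)))
          (Cmul (Csin (Caffine p C0 x)) (Csin (Caffine p C0 x))))));
    [unfold Csub; ring | rewrite Hpyth; ring].
Qed.

Lemma green_jump_3 (x : R) :
  green_jump 3 x = Cmul (Cadd (Cmul p (Cmul p p)) (Cmul p (Cmul p p))) (Csin (Cscal 2 p)).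
Proof.
  pose proof (Ccos_sq_add_Csin_sq (Caffine p C0 x)) as Hpyth. expand_jump.
  transitivity (Cmul (Cmul (Cadd (Cmul p (Cmul p p)) (Cmul p (Cmul p p))) (Csin (Cscal 2 p)))
    (Cadd (Cmul (Ccos (Caffine p C0 x)) (Ccos (Caffine p C0 x)))
          (Cmul (Csin (Caffine p C0 x)) (Csin (Caffine p C0 x)))));
    [unfold Csub; ring | rewrite Hpyth; ring].
Qed.

Definition green_deriv (k : nat) (x : R) : R := green_const * snd (Cmul (green_integral k x) green_den).

Lemma green_den_inv : Cmul (Cmul p (Csin (Cscal 2 p))) green_den = C1.
Proof. apply Cmul_Cinv_r, Cmul_neq0; [apply p_neq0 | apply Csin_2p_neq0]. Qed.

Lemma is_derive_green_deriv (k : nat) (x : R) :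
  is_derive (green_deriv k) x
    (green_const * snd (Cmul (Cadd (green_integral (S k) x) (Cmul (RtoC (r x)) (green_jump k x))) green_den)).
Proof.
  destruct (is_Cderive_mult_r _ green_den x _ (is_Cderive_green_integral k x)) as [_ H].
  apply is_derive_Reals, derivable_pt_lim_scal, is_derive_Reals, H.
Qed.

Lemma is_derive_green_deriv_even (k : nat) (x : R) : (k = 0 \/ k = 2)%nat ->
  is_derive (green_deriv k) x (green_deriv (S k) x).
Proof.
  intros Hk. eapply is_derive_eq; [apply is_derive_green_deriv |].
  unfold green_deriv. f_equal.
  destruct Hk; subst; [rewrite green_jump_0 | rewrite green_jump_2];
    destruct (green_integral _ x), green_den; unfold C0; simpl; ring.
Qed.

Lemma is_derive_green_deriv_1 (x : R) : is_derive (green_deriv 1) x (green_deriv 2 x).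
Proof.
  eapply is_derive_eq; [apply is_derive_green_deriv |].
  unfold green_deriv. f_equal. rewrite green_jump_1.
  replace (Cmul (Cadd (green_integral 2 x) (Cmul (RtoC (r x)) (Copp (Cmul (Cadd p p) (Csin (Cscal 2 p))))))
                green_den)
    with (Cadd (Cmul (green_integral 2 x) green_den) (RtoC (- 2 * r x))).
  - apply Im_add_RtoC.
  - replace (RtoC (- 2 * r x)) with (Cmul (RtoC (r x)) (Copp (Cadd C1 C1))) by (apply Cplx_ext; simpl; ring).
    rewrite <- green_den_inv. ring.
Qed.

Lemma is_derive_green_deriv_3 (x : R) :
  is_derive (green_deriv 3) x (green_deriv 4 x + r x / (D * nu)).
Proof.
  pose proof Im_pplus2_pos.
  eapply is_derive_eq; [apply is_derive_green_deriv |]. rewrite green_jump_3.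
  replace (Cmul (Cadd (green_integral 4 x) (Cmul (RtoC (r x))
             (Cmul (Cadd (Cmul p (Cmul p p)) (Cmul p (Cmul p p))) (Csin (Cscal 2 p))))) green_den)
    with (Cadd (Cmul (green_integral 4 x) green_den) (Cmul (RtoC (2 * r x)) (Cmul p p))).
  - rewrite p_sq. unfold green_deriv, green_const. rewrite Im_pplus2_sub_pminus2.
    destruct (Cmul (green_integral 4 x) green_den), (pplus2 D nu Rr); simpl in *. field. lra.
  - replace (RtoC (2 * r x)) with (Cmul (RtoC (r x)) (Cadd C1 C1)) by (apply Cplx_ext; simpl; ring).
    rewrite <- green_den_inv. ring.
Qed.

Lemma green_deriv_ode (x : R) :
  (1 + D * Rr) * green_deriv 0 x + D * green_deriv 2 x + D * nu * (green_deriv 4 x + r x / (D * nu)) = r x.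
Proof.
  pose proof Im_pplus2_pos. pose proof (pplus2_char) as Hchar. rewrite <- p_sq in Hchar.
  unfold green_deriv. rewrite !green_integral_SS.
  set (W := Cmul (green_integral 0 x) green_den).
  replace (Cmul (Copp (Cmul (Cmul p p) (green_integral 0 x))) green_den)
    with (Copp (Cmul (Cmul p p) W)) by (unfold W; ring).
  replace (Cmul (Copp (Cmul (Cmul p p) (Copp (Cmul (Cmul p p) (green_integral 0 x))))) green_den)
    with (Cmul (Cmul (Cmul p p) (Cmul p p)) W) by (unfold W; ring).
  assert (E : (1 + D * Rr) * snd W + D * snd (Copp (Cmul (Cmul p p) W))
              + D * nu * snd (Cmul (Cmul (Cmul p p) (Cmul p p)) W) = 0).
  { transitivity (snd (Cmul (Cadd (Cadd (RtoC (1 + D * Rr)) (Copp (Cmul (RtoC D) (Cmul p p))))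
                                  (Cmul (RtoC (D * nu)) (Cmul (Cmul p p) (Cmul p p)))) W)).
    - clearbody W. destruct (Cmul p p), W; simpl. ring.
    - rewrite Hchar. destruct W; simpl. ring. }
  transitivity (green_const * ((1 + D * Rr) * snd W + D * snd (Copp (Cmul (Cmul p p) W))
                + D * nu * snd (Cmul (Cmul (Cmul p p) (Cmul p p)) W)) + r x).
  - field. lra.
  - rewrite E. ring.
Qed.

Lemma green_integral_0_m1 : green_integral 0 (-1) = C0.
Proof.
  unfold green_integral, hi_cos, hi_sin, trig_deriv. cbn [trig_coef fst snd].
  rewrite !CRInt_point, Caffine_shift.
  replace (Caffine p C0 (-1)) with (Copp p) by (unfold Caffine, C0; Cplx_ring).
  replace (Cadd (Cscal 2 p) (Copp p)) with p by (Cplx_ring).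
  rewrite Ccos_opp, Csin_opp. ring.
Qed.

Lemma green_integral_0_1 : green_integral 0 1 = C0.
Proof.
  unfold green_integral, lo_cos, lo_sin, trig_deriv. cbn [trig_coef fst snd].
  rewrite !CRInt_point, Caffine_reflect.
  replace (Caffine p C0 1) with p by (unfold Caffine, C0; Cplx_ring).
  replace (Csub (Cscal 2 p) p) with p by (unfold Csub; Cplx_ring).
  ring.
Qed.

Lemma green_deriv_even_eq0 (k : nat) (x : R) : (k = 0 \/ k = 2)%nat ->
  green_integral 0 x = C0 -> green_deriv k x = 0.
Proof.
  intros Hk H. unfold green_deriv.
  destruct Hk; subst; [| rewrite green_integral_SS]; rewrite H;
    destruct green_den, (Cmul p p); unfold C0; simpl; ring.
Qed.

Lemma green_num_lo (x y : R) : y <= x ->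
  green_num x y = Cadd (Cmul (lo_cos 0 x) (cos_p y)) (Cmul (lo_sin 0 x) (sin_p y)).
Proof.
  intros H. unfold green_num, lo_cos, lo_sin, trig_deriv, cos_p, sin_p. cbn [trig_coef fst snd].
  rewrite Rabs_pos_eq by lra.
  replace (Csub (Cscal 2 p) (Cscal (x - y) p)) with (Cadd (Caffine (Copp p) (Cscal 2 p) x) (Caffine p C0 y))
    by (unfold Caffine, C0; Cplx_ring).
  replace (Cscal (x + y) p) with (Cadd (Caffine p C0 x) (Caffine p C0 y)) by (unfold Caffine, C0; Cplx_ring).
  rewrite !Ccos_add. unfold Csub. ring.
Qed.

Lemma green_num_hi (x y : R) : x <= y ->
  green_num x y = Cadd (Cmul (hi_cos 0 x) (cos_p y)) (Cmul (hi_sin 0 x) (sin_p y)).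
Proof.
  intros H. unfold green_num, hi_cos, hi_sin, trig_deriv, cos_p, sin_p. cbn [trig_coef fst snd].
  rewrite Rabs_left1 by lra.
  replace (Csub (Cscal 2 p) (Cscal (- (x - y)) p)) with (Csub (Caffine p (Cscal 2 p) x) (Caffine p C0 y))
    by (unfold Caffine, C0; Cplx_ring).
  replace (Cscal (x + y) p) with (Cadd (Caffine p C0 x) (Caffine p C0 y)) by (unfold Caffine, C0; Cplx_ring).
  rewrite Ccos_sub, !Ccos_add. unfold Csub. ring.
Qed.

Lemma is_RInt_green (x : R) : -1 <= x <= 1 ->
  is_RInt (fun y => Gfun D nu Rr p x y * r y) (-1) 1 (green_deriv 0 x).
Proof.
  intros Hx.
  assert (Hc : forall y, Ccontinuous cos_p y) by (intros; apply Ccontinuous_Ccos_affine).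
  assert (Hs : forall y, Ccontinuous sin_p y) by (intros; apply Ccontinuous_Csin_affine).
  set (lo := Cadd (Cmul (lo_cos 0 x) (CRInt cos_p r (-1) x)) (Cmul (lo_sin 0 x) (CRInt sin_p r (-1) x))).
  set (hi := Cadd (Cmul (hi_cos 0 x) (CRInt cos_p r x 1)) (Cmul (hi_sin 0 x) (CRInt sin_p r x 1))).
  assert (Jlo : is_RInt (fun y => Gfun D nu Rr p x y * r y) (-1) x (green_const * snd (Cmul lo green_den))).
  { eapply is_RInt_ext; [| apply is_RInt_Im_lincomb; auto].
    intros y Hy. rewrite Rmin_left, Rmax_right in Hy by lra.
    rewrite Gfun_eq, green_num_lo by lra. reflexivity. }
  assert (Jhi : is_RInt (fun y => Gfun D nu Rr p x y * r y) x 1 (green_const * snd (Cmul hi green_den))).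
  { eapply is_RInt_ext; [| apply is_RInt_Im_lincomb; auto].
    intros y Hy. rewrite Rmin_left, Rmax_right in Hy by lra.
    rewrite Gfun_eq, green_num_hi by lra. reflexivity. }
  replace (green_deriv 0 x) with (plus (green_const * snd (Cmul lo green_den))
                                       (green_const * snd (Cmul hi green_den))).
  - exact (is_RInt_Chasles _ _ _ _ _ _ Jlo Jhi).
  - unfold green_deriv, green_integral. fold lo hi. unfold plus; simpl.
    destruct lo, hi, green_den. simpl; ring.
Qed.

Lemma green_deriv_solution (r0 : R -> R) :
  (forall x, -1 < x < 1 -> r x = r0 x) -> is_solution D nu Rr r0 (green_deriv 0).
Proof.
  intros Hr0.
  assert (D0 : forall x, is_derive (green_deriv 0) x (green_deriv 1 x))
    by (intros; apply is_derive_green_deriv_even; auto).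
  assert (D2 : forall x, is_derive (green_deriv 2) x (green_deriv 3 x))
    by (intros; apply is_derive_green_deriv_even; auto).
  pose proof is_derive_green_deriv_1 as D1. pose proof is_derive_green_deriv_3 as D3.
  exists (green_deriv 1), (green_deriv 2), (green_deriv 3), (fun x => green_deriv 4 x + r x / (D * nu)).
  repeat split.
  - apply is_derive_Reals, D0.
  - apply is_derive_Reals, D1.
  - apply is_derive_Reals, D2.
  - apply is_derive_Reals, D3.
  - rewrite green_deriv_ode. now apply Hr0.
  - apply cont_on_I_of_ex_derive. intros x. eexists. apply D0.
  - apply cont_on_I_of_ex_derive. intros x. eexists. apply D1.
  - apply cont_on_I_of_ex_derive. intros x. eexists. apply D2.
  - apply cont_on_I_of_ex_derive. intros x. eexists. apply D3.
  - apply green_deriv_even_eq0; auto using green_integral_0_m1.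
  - apply green_deriv_even_eq0; auto using green_integral_0_1.
  - apply green_deriv_even_eq0; auto using green_integral_0_m1.
  - apply green_deriv_even_eq0; auto using green_integral_0_1.
Qed.

End GreenSolution.

End Kernel.

(** * Continuous extension of the right-hand side *)

Definition clamp (y : R) : R := Rmax (-1) (Rmin 1 y).

Lemma inI_clamp (y : R) : inI (clamp y).
Proof. unfold inI, clamp, Rmax, Rmin. destruct (Rle_dec 1 y), (Rle_dec (-1) _); lra. Qed.

Lemma clamp_inI (y : R) : inI y -> clamp y = y.
Proof. unfold inI, clamp, Rmax, Rmin. intros. destruct (Rle_dec 1 y), (Rle_dec (-1) _); lra. Qed.

Lemma Rabs_clamp_sub_le (z y : R) : Rabs (clamp z - clamp y) <= Rabs (z - y).
Proof.
  pose proof (Rle_abs (z - y)). pose proof (Rle_abs (- (z - y))) as K. rewrite Rabs_Ropp in K.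
  apply Rabs_le. unfold clamp, Rmax, Rmin. repeat destruct Rle_dec; lra.
Qed.

Lemma continuous_clamp_comp (r : R -> R) : cont_on_I r -> forall y, continuous (fun y => r (clamp y)) y.
Proof.
  intros Hr y. apply continuity_pt_filterlim.
  intros eps He. destruct (Hr (clamp y) (inI_clamp y) eps He) as [alp [Ha H]].
  exists alp. split; [exact Ha |]. intros z [_ Hz]. apply H. split; [apply inI_clamp |].
  simpl in *. unfold R_dist in *. eapply Rle_lt_trans; [apply Rabs_clamp_sub_le | exact Hz].
Qed.

Theorem mainTheorem2 (D nu Rr : R) (p : Cplx)
  (hD : 0 < D) (hnu : 0 < nu) (hdisc : discr D nu Rr < 0)
  (hp : Cmul p p = pplus2 D nu Rr) :
  (forall x y : R, inI x -> inI y ->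
     infinite_sum (fun n => series_term D nu Rr x y (S n)) (Gfun D nu Rr p x y)) /\
  (forall r : R -> R, cont_on_I r ->
     (forall x, inI x -> inhabited (Riemann_integrable (fun y => Gfun D nu Rr p x y * r y) (-1) 1)) /\
     exists v : R -> R,
       (forall x (hx : inI x)
          (pr : Riemann_integrable (fun y => Gfun D nu Rr p x y * r y) (-1) 1),
          v x = RiemannInt pr) /\
       is_solution D nu Rr r v).
Proof.
  split; [exact (series_term_sum D nu Rr hD hnu hdisc p hp) |].
  intros r Hr. set (rc := fun y => r (clamp y)).
  pose proof (continuous_clamp_comp r Hr) as Hrc.
  assert (HI : forall x, inI x ->
                 is_RInt (fun y => Gfun D nu Rr p x y * r y) (-1) 1 (green_deriv D nu Rr p rc 0 x)).
  { intros x Hx. eapply is_RInt_ext; [| apply is_RInt_green; auto].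
    intros y Hy. rewrite Rmin_left, Rmax_right in Hy by lra.
    unfold rc. rewrite clamp_inI; [reflexivity | unfold inI; lra]. }
  split; [intros x Hx; constructor; apply ex_RInt_Reals_0; eexists; apply HI, Hx |].
  exists (green_deriv D nu Rr p rc 0). split.
  - intros x Hx pr. rewrite <- RInt_Reals. symmetry.
    apply (is_RInt_unique (V := R_CompleteNormedModule)), HI, Hx.
  - apply green_deriv_solution; auto.
    intros x Hx. unfold rc. rewrite clamp_inI; [reflexivity | unfold inI; lra].
Qed.
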